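(* Fix $A,B\in\mathbb R$ and $T>0$. There is $C=C(A,B,T)$, not depending on $\epsilon=N^{-1}$, such that for all sufficiently large $N$, all $0\le s<t\le\epsilon^{-2}T$, all $x,y\in\{0,\dots,N\}$ and all $v\in[0,1]$, $$|\mathbf p_t^R(x,y)-\mathbf p_s^R(x,y)|\le C\,(1\wedge s^{-1/2-v})\,(t-s)^v.$$
   Context: For $N\ge1$, $\epsilon=1/N$, $\mu_A=1-A\epsilon$, $\mu_B=1-B\epsilon$, $\Delta_{A,B}$ is the $(N+1)\times(N+1)$ tridiagonal matrix indexed by $\{0,\dots,N\}$ with off-diagonal entries $1$, diagonal entries $-2$ except the $(0,0)$ entry $\mu_A-2$ and the $(N,N)$ entry $\mu_B-2$. The bounded-interval Robin heat kernel is $\mathbf p_t^R(x,y)=\big(\exp(\tfrac t2\Delta_{A,B})\big)_{x,y}$ for $x,y\in\{0,\dots,N\}$, $t\ge0$. *)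

From Stdlib Require Import Reals Lra Lia Classical ClassicalEpsilon.
Open Scope R_scope.

Definition eps (N : nat) : R := / INR N.

(* The (N+1)x(N+1) tridiagonal matrix Delta_{A,B}, indexed by {0..N}
   (entries outside this range are irrelevant; set to 0). *)
Definition Delta (A B : R) (N : nat) (i j : nat) : R :=
  if Nat.ltb N i then 0 else if Nat.ltb N j then 0 else
  if Nat.eqb i j then
    (if Nat.eqb i 0 then (1 - A * eps N) - 2
     else if Nat.eqb i N then (1 - B * eps N) - 2
     else -2)
  else if orb (Nat.eqb (S i) j) (Nat.eqb i (S j)) then 1 else 0.

Definition matmul (N : nat) (M1 M2 : nat -> nat -> R) (i j : nat) : R :=
  sum_f_R0 (fun k => M1 i k * M2 k j) N.

Definition idmat (i j : nat) : R := if Nat.eqb i j then 1 else 0.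

Fixpoint matpow (N : nat) (M : nat -> nat -> R) (k : nat) : nat -> nat -> R :=
  match k with
  | O => idmat
  | S k' => matmul N (matpow N M k') M
  end.

Definition expPartial (A B : R) (N : nat) (t : R) (x y : nat) (n : nat) : R :=
  sum_f_R0 (fun k => (t / 2) ^ k / INR (Factorial.fact k) * matpow N (Delta A B N) k x y) n.

(* Robin heat kernel p^R_t(x,y) = (exp(t/2 Delta_{A,B}))_{x,y}, the limit of the series. *)
Definition pR (A B : R) (N : nat) (t : R) (x y : nat) : R :=
  proj1_sig (constructive_indefinite_description
    (fun l => Un_cv (expPartial A B N t x y) l \/
              (~ (exists l', Un_cv (expPartial A B N t x y) l') /\ l = 0))
    (match classic (exists l', Un_cv (expPartial A B N t x y) l') with
     | or_introl H => match H with ex_intro _ l Hl => ex_intro _ l (or_introl Hl) end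
     | or_intror H => ex_intro _ 0 (or_intror (conj H eq_refl))
     end)).

(* 1 /\ s^{-1/2-v}, with the convention that it equals 1 at s = 0 *)
Definition minfac (s v : R) : R :=
  if Req_EM_T s 0 then 1 else Rmin 1 (Rpower s (-(1/2) - v)).

(* The row [w t = pR t x] solves [w' = w Delta / 2] with [Delta] symmetric.
   Summation by parts makes [-Delta] coercive up to the Robin terms, so the
   energy [E = |w|_2^2] obeys [E' <= - D / 2 + O(eps^2) E], [D] the Dirichlet
   form.  The kernel is nonnegative, and the supersolution [q^z + q^(N-z)],
   [q = 1 - a eps], bounds the mass [|w|_1] uniformly for [t <= N^2 T]; the
   discrete Nash inequality [E^3 <~ |w|_1^2 D + O(eps^2) E] then gives
   [E(t) <~ t^(-1/2)].  Since the dissipation is monotone along the flow,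
   [D(t) <~ t^(-3/2)], and the same argument applied to [w Delta] controls the
   time derivative.  Averaging over a window of [sqrt t] sites turns these
   [l2] bounds into [|pR t| <~ t^(-1/2)] and [|d/dt pR t| <~ t^(-3/2)], and
   interpolating with the trivial bounds gives the Hölder estimate. *)

From Stdlib Require Import Reals Lra Lia Psatz ZArith.
From Coquelicot Require Import Coquelicot.
Open Scope R_scope.

Fixpoint rsum (f : nat -> R) (n : nat) : R :=
  match n with O => 0 | S n => rsum f n + f n end.

Lemma sum_f_R0_rsum f n : sum_f_R0 f n = rsum f (S n).
Proof. induction n; simpl; [lra|]. rewrite IHn. simpl. lra. Qed.

Lemma rsum_ext f g n : (forall k, (k < n)%nat -> f k = g k) -> rsum f n = rsum g n.
Proof.
  induction n; intros H; simpl; [lra|].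
  rewrite IHn by (intros; apply H; lia). rewrite H by lia; lra.
Qed.

Lemma rsum_plus f g n : rsum (fun k => f k + g k) n = rsum f n + rsum g n.
Proof. induction n; simpl; lra. Qed.

Lemma rsum_minus f g n : rsum (fun k => f k - g k) n = rsum f n - rsum g n.
Proof. induction n; simpl; lra. Qed.

Lemma rsum_scal c f n : rsum (fun k => c * f k) n = c * rsum f n.
Proof. induction n; simpl; [lra|]. rewrite IHn; lra. Qed.

Lemma rsum_const c n : rsum (fun _ => c) n = INR n * c.
Proof. induction n; [simpl; lra|]. cbn [rsum]. rewrite IHn, S_INR. lra. Qed.

Lemma rsum_le f g n : (forall k, (k < n)%nat -> f k <= g k) -> rsum f n <= rsum g n.
Proof.
  induction n; intros H; simpl; [lra|].
  assert (rsum f n <= rsum g n) by (apply IHn; intros; apply H; lia).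
  assert (f n <= g n) by (apply H; lia). lra.
Qed.

Lemma rsum_nonneg f n : (forall k, (k < n)%nat -> 0 <= f k) -> 0 <= rsum f n.
Proof.
  intros H. replace 0 with (rsum (fun _ => 0) n) by (rewrite rsum_const; ring).
  apply rsum_le; auto.
Qed.

Lemma rsum_abs f n : Rabs (rsum f n) <= rsum (fun k => Rabs (f k)) n.
Proof. induction n; simpl. rewrite Rabs_R0; lra. eapply Rle_trans; [apply Rabs_triang|lra]. Qed.

Lemma rsum_shift f n : rsum f (S n) = f O + rsum (fun k => f (S k)) n.
Proof. induction n; simpl in *; [lra|]. rewrite IHn. lra. Qed.

Lemma rsum_split f a n : rsum f (a + n) = rsum f a + rsum (fun k => f (a + k)%nat) n.
Proof.
  induction n; simpl; [rewrite Nat.add_0_r; lra|].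
  rewrite Nat.add_succ_r. simpl. rewrite IHn; lra.
Qed.

Lemma rsum_swap f n m :
  rsum (fun i => rsum (fun j => f i j) m) n = rsum (fun j => rsum (fun i => f i j) n) m.
Proof.
  induction n; simpl.
  - rewrite rsum_const; ring.
  - rewrite IHn, <- rsum_plus. reflexivity.
Qed.

Lemma rsum_idmat u j n :
  rsum (fun z => u z * idmat z j) n = if Nat.ltb j n then u j else 0.
Proof.
  unfold idmat. induction n; simpl; [destruct j; reflexivity|]. rewrite IHn.
  destruct (Nat.eqb_spec n j), (Nat.ltb_spec j n), (Nat.ltb_spec j (S n)); subst; try lia; lra.
Qed.

Lemma rsum_window_le g s m n : (forall k, (k < n)%nat -> 0 <= g k) -> (s + m <= n)%nat ->
  rsum (fun k => g (s + k)%nat) m <= rsum g n.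
Proof.
  intros H Hle. replace n with ((s + m) + (n - (s + m)))%nat by lia.
  rewrite !rsum_split.
  assert (0 <= rsum g s) by (apply rsum_nonneg; intros; apply H; lia).
  assert (0 <= rsum (fun k => g (s + m + k)%nat) (n - (s + m)))
    by (apply rsum_nonneg; intros; apply H; lia).
  lra.
Qed.

Lemma rsum_Cauchy_Schwarz f n : rsum f n ^ 2 <= INR n * rsum (fun k => f k ^ 2) n.
Proof.
  induction n; [simpl; lra|]. cbn [rsum]. rewrite S_INR.
  destruct (Nat.eq_dec n 0) as [->|Hn0]; [simpl; lra|].
  assert (Hn : 0 < INR n) by (apply lt_0_INR; lia).
  set (S0 := rsum f n) in *. set (T0 := rsum (fun k => f k ^ 2) n) in *.
  assert (Hcross : 2 * S0 * f n <= S0 ^ 2 / INR n + INR n * f n ^ 2).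
  { assert (Hsq : 0 <= (S0 / INR n - f n) ^ 2 * INR n)
      by (apply Rmult_le_pos; [apply pow2_ge_0|lra]).
    replace ((S0 / INR n - f n) ^ 2 * INR n)
      with (S0 ^ 2 / INR n - 2 * S0 * f n + INR n * f n ^ 2) in Hsq by (field; lra).
    lra. }
  assert (S0 ^ 2 / INR n <= T0).
  { apply Rmult_le_reg_l with (INR n); auto. field_simplify; lra. }
  nra.
Qed.

Lemma ceil_nat x : 0 <= x -> exists m : nat, x < INR m <= x + 1.
Proof.
  intros Hx. destruct (archimed x) as [H1 H2].
  assert (Hz : (0 <= up x)%Z) by (apply le_IZR; lra).
  exists (Z.to_nat (up x)). rewrite INR_IZR_INZ, Z2Nat.id by auto. lra.
Qed.

(** Functions [u : nat -> R] stand for row vectors indexed by [{0..N}];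
    their values outside this range are never used. *)

Definition vecmat (N : nat) (M : nat -> nat -> R) (u : nat -> R) (y : nat) : R :=
  rsum (fun z => u z * M z y) (S N).
Definition quadform (N : nat) (M : nat -> nat -> R) (u : nat -> R) : R :=
  rsum (fun y => u y * vecmat N M u y) (S N).
Definition energy (N : nat) (u : nat -> R) : R := rsum (fun z => u z ^ 2) (S N).
Definition dirichlet (N : nat) (u : nat -> R) : R := rsum (fun k => (u (S k) - u k) ^ 2) N.
Definition l1norm (N : nat) (u : nat -> R) : R := rsum (fun z => Rabs (u z)) (S N).

Lemma energy_nonneg N u : 0 <= energy N u.
Proof. apply rsum_nonneg; intros; apply pow2_ge_0. Qed.

Lemma dirichlet_nonneg N u : 0 <= dirichlet N u.
Proof. apply rsum_nonneg; intros; apply pow2_ge_0. Qed.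

Lemma l1norm_nonneg N u : 0 <= l1norm N u.
Proof. apply rsum_nonneg; intros; apply Rabs_pos. Qed.

Lemma sq_le_energy N u y : (y <= N)%nat -> u y ^ 2 <= energy N u.
Proof.
  intros Hy. pose proof (rsum_window_le (fun z => u z ^ 2) y 1 (S N)) as Hw.
  simpl in Hw. rewrite Nat.add_0_r in Hw.
  assert (0 + u y ^ 2 <= energy N u) by (apply Hw; [intros; apply pow2_ge_0|lia]). lra.
Qed.

Lemma vecmat_lin N M a b ca cb y :
  vecmat N M (fun z => ca * a z + cb * b z) y = ca * vecmat N M a y + cb * vecmat N M b y.
Proof. unfold vecmat. rewrite <- !rsum_scal, <- rsum_plus. apply rsum_ext; intros; ring. Qed.

(** * The Robin Laplacian *)

Lemma eps_pos N : (1 <= N)%nat -> 0 < eps N.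
Proof. intros HN. unfold eps. apply Rinv_0_lt_compat, lt_0_INR. lia. Qed.

Lemma eps_le_1 N : (1 <= N)%nat -> eps N <= 1.
Proof.
  intros HN. assert (1 <= INR N) by (apply (le_INR 1); auto).
  unfold eps. rewrite <- Rinv_1. apply Rinv_le_contravar; lra.
Qed.

Lemma Delta_sym A B N i j : Delta A B N i j = Delta A B N j i.
Proof.
  unfold Delta.
  repeat match goal with |- context [Nat.eqb ?a ?b] => destruct (Nat.eqb_spec a b) end;
  repeat match goal with |- context [Nat.ltb ?a ?b] => destruct (Nat.ltb_spec a b) end;
  simpl; subst; try lia; lra.
Qed.

Lemma Delta_offdiag_nonneg A B N i j : i <> j -> 0 <= Delta A B N i j.
Proof.
  intros H. unfold Delta.
  repeat match goal with |- context [Nat.eqb ?a ?b] => destruct (Nat.eqb_spec a b) end;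
  repeat match goal with |- context [Nat.ltb ?a ?b] => destruct (Nat.ltb a b) end;
  simpl; try lra; lia.
Qed.

Definition Delta_max (A B : R) (N : nat) : R := 3 + Rabs (A * eps N) + Rabs (B * eps N).

Lemma Delta_max_nonneg A B N : 0 <= Delta_max A B N.
Proof.
  unfold Delta_max. pose proof (Rabs_pos (A * eps N)). pose proof (Rabs_pos (B * eps N)). lra.
Qed.

Lemma Delta_bound A B N i j : Rabs (Delta A B N i j) <= Delta_max A B N.
Proof.
  unfold Delta_max, Delta.
  repeat match goal with |- context [Nat.eqb ?a ?b] => destruct (Nat.eqb a b) end;
  repeat match goal with |- context [Nat.ltb ?a ?b] => destruct (Nat.ltb a b) end; simpl;
  unfold Rabs; repeat match goal with |- context [Rcase_abs ?x] => destruct (Rcase_abs x) end; lra.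
Qed.

Lemma Delta_expand A B N z y : (1 <= N)%nat -> (z <= N)%nat -> (y <= N)%nat ->
  Delta A B N z y = -2 * idmat z y + idmat z (S y)
     + (if Nat.eqb y 0 then 0 else idmat z (pred y))
     + (if Nat.eqb y 0 then (1 - A * eps N) * idmat z 0 else 0)
     + (if Nat.eqb y N then (1 - B * eps N) * idmat z N else 0).
Proof.
  intros H1 Hz Hy. unfold Delta, idmat.
  destruct (Nat.ltb_spec N z); [lia|]. destruct (Nat.ltb_spec N y); [lia|].
  repeat match goal with |- context [Nat.eqb ?a ?b] => destruct (Nat.eqb_spec a b) end;
  simpl; subst; try lia; lra.
Qed.

Lemma vecmat_Delta A B N u y : (1 <= N)%nat -> (y <= N)%nat ->
  vecmat N (Delta A B N) u y = -2 * u y + (if Nat.ltb y N then u (S y) else 0)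
     + (if Nat.eqb y 0 then 0 else u (pred y))
     + (if Nat.eqb y 0 then (1 - A * eps N) * u O else 0)
     + (if Nat.eqb y N then (1 - B * eps N) * u N else 0).
Proof.
  intros H1 Hy. unfold vecmat.
  rewrite (rsum_ext _ (fun z => -2 * (u z * idmat z y) + u z * idmat z (S y)
     + (if Nat.eqb y 0 then 0 else u z * idmat z (pred y))
     + (if Nat.eqb y 0 then (1 - A * eps N) * (u z * idmat z 0) else 0)
     + (if Nat.eqb y N then (1 - B * eps N) * (u z * idmat z N) else 0))).
  2:{ intros z Hz. rewrite Delta_expand by lia.
      destruct (Nat.eqb y 0), (Nat.eqb y N); ring. }
  rewrite !rsum_plus, rsum_scal, !rsum_idmat.
  destruct (Nat.eqb_spec y 0), (Nat.eqb_spec y N); rewrite ?rsum_scal, ?rsum_idmat, ?rsum_const;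
  repeat match goal with |- context [Nat.ltb ?a ?b] => destruct (Nat.ltb_spec a b) end;
  try lia; lra.
Qed.

Lemma quadform_Delta A B N u : (1 <= N)%nat ->
  quadform N (Delta A B N) u = - dirichlet N u - A * eps N * u O ^ 2 - B * eps N * u N ^ 2.
Proof.
  intros H1. unfold quadform.
  rewrite (rsum_ext _ (fun y => -2 * u y ^ 2 + (if Nat.ltb y N then u y * u (S y) else 0)
     + (if Nat.eqb y 0 then 0 else u y * u (pred y))
     + (if Nat.eqb y 0 then (1 - A * eps N) * u O ^ 2 else 0)
     + (if Nat.eqb y N then (1 - B * eps N) * u N ^ 2 else 0))).
  2:{ intros y Hy. rewrite vecmat_Delta by lia.
      destruct (Nat.eqb_spec y 0), (Nat.eqb_spec y N), (Nat.ltb_spec y N); subst; try lia; ring. }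
  rewrite !rsum_plus, rsum_scal.
  assert (E1 : rsum (fun y => if Nat.ltb y N then u y * u (S y) else 0) (S N)
             = rsum (fun k => u k * u (S k)) N).
  { cbn [rsum]. destruct (Nat.ltb_spec N N); [lia|]. rewrite Rplus_0_r.
    apply rsum_ext. intros k Hk. destruct (Nat.ltb_spec k N); [reflexivity|lia]. }
  assert (E2 : rsum (fun y => if Nat.eqb y 0 then 0 else u y * u (pred y)) (S N)
             = rsum (fun k => u k * u (S k)) N).
  { rewrite rsum_shift. simpl. rewrite Rplus_0_l. apply rsum_ext. intros; ring. }
  assert (E3 : rsum (fun y => if Nat.eqb y 0 then (1 - A * eps N) * u O ^ 2 else 0) (S N)
             = (1 - A * eps N) * u O ^ 2).
  { rewrite rsum_shift. simpl. rewrite rsum_const. ring. }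
  assert (E4 : rsum (fun y => if Nat.eqb y N then (1 - B * eps N) * u N ^ 2 else 0) (S N)
             = (1 - B * eps N) * u N ^ 2).
  { cbn [rsum]. rewrite Nat.eqb_refl, (rsum_ext _ (fun _ => 0)), rsum_const; [ring|].
    intros k Hk. destruct (Nat.eqb_spec k N); [lia|reflexivity]. }
  rewrite E1, E2, E3, E4. unfold dirichlet.
  rewrite (rsum_ext (fun k => (u (S k) - u k) ^ 2)
             (fun k => u (S k) ^ 2 + u k ^ 2 - 2 * (u k * u (S k)))) by (intros; ring).
  rewrite rsum_minus, rsum_plus, rsum_scal.
  assert (F1 : rsum (fun k => u (S k) ^ 2) N = rsum (fun z => u z ^ 2) (S N) - u O ^ 2)
    by (rewrite (rsum_shift (fun z => u z ^ 2)); cbv beta; ring).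
  assert (F2 : rsum (fun k => u k ^ 2) N = rsum (fun z => u z ^ 2) (S N) - u N ^ 2)
    by (cbn [rsum]; ring).
  rewrite F1, F2. ring.
Qed.

(** * Discrete Sobolev and Nash inequalities *)

Lemma telescope u a n :
  u (a + n)%nat - u a = rsum (fun k => u (S (a + k)) - u (a + k)%nat) n.
Proof.
  induction n; simpl; [rewrite Nat.add_0_r; ring|].
  rewrite <- IHn, Nat.add_succ_r. ring.
Qed.

Lemma sq_diff_le_dirichlet_ordered N u a b : (a <= b)%nat -> (b <= N)%nat ->
  (u b - u a) ^ 2 <= INR (b - a) * dirichlet N u.
Proof.
  intros Hab HbN. replace b with (a + (b - a))%nat at 1 by lia. rewrite telescope.
  eapply Rle_trans; [apply rsum_Cauchy_Schwarz|].
  apply Rmult_le_compat_l; [apply pos_INR|].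
  apply (rsum_window_le (fun k => (u (S k) - u k) ^ 2) a (b - a) N); [|lia].
  intros; apply pow2_ge_0.
Qed.

Lemma sq_diff_le_dirichlet N u i j m : (i <= N)%nat -> (j <= N)%nat ->
  (i - j <= m)%nat -> (j - i <= m)%nat -> (u i - u j) ^ 2 <= INR m * dirichlet N u.
Proof.
  intros Hi Hj H1 H2. pose proof (dirichlet_nonneg N u).
  destruct (Nat.le_ge_cases i j).
  - replace ((u i - u j) ^ 2) with ((u j - u i) ^ 2) by ring.
    eapply Rle_trans; [apply sq_diff_le_dirichlet_ordered; eauto|].
    apply Rmult_le_compat_r; auto. apply le_INR; lia.
  - eapply Rle_trans; [apply sq_diff_le_dirichlet_ordered; eauto|].
    apply Rmult_le_compat_r; auto. apply le_INR; lia.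
Qed.

Lemma abs_le_sqrt x y : x ^ 2 <= y -> Rabs x <= sqrt y.
Proof.
  intros H. rewrite <- sqrt_Rsqr_abs. apply sqrt_le_1_alt. rewrite Rsqr_pow2; auto.
Qed.

(** Averaging over a window of [m] sites that contains [i]. *)
Lemma sq_le_window N u i m : (i <= N)%nat -> (1 <= m)%nat -> (m <= S N)%nat ->
  INR m * u i ^ 2 <= 2 * energy N u + 2 * INR m ^ 2 * dirichlet N u.
Proof.
  intros Hi Hm1 Hm2. set (s := Nat.min i (S N - m)).
  assert (Hsum : rsum (fun _ => u i ^ 2) m
              <= rsum (fun k => 2 * u (s + k)%nat ^ 2 + 2 * (INR m * dirichlet N u)) m).
  { apply rsum_le. intros k Hk.
    assert ((u i - u (s + k)%nat) ^ 2 <= INR m * dirichlet N u)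
      by (apply sq_diff_le_dirichlet; unfold s; lia).
    pose proof (pow2_ge_0 (u i - 2 * u (s + k)%nat)). nra. }
  rewrite rsum_const, rsum_plus, rsum_scal, rsum_const in Hsum.
  assert (rsum (fun k => u (s + k)%nat ^ 2) m <= energy N u).
  { apply (rsum_window_le (fun z => u z ^ 2)); [intros; apply pow2_ge_0|unfold s; lia]. }
  nra.
Qed.

Lemma abs_le_window N u i m : (i <= N)%nat -> (1 <= m)%nat -> (m <= S N)%nat ->
  INR m * Rabs (u i) <= l1norm N u + INR m * sqrt (INR m * dirichlet N u).
Proof.
  intros Hi Hm1 Hm2. set (s := Nat.min i (S N - m)).
  assert (Hsum : rsum (fun _ => Rabs (u i)) m
              <= rsum (fun k => Rabs (u (s + k)%nat) + sqrt (INR m * dirichlet N u)) m).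
  { apply rsum_le. intros k Hk.
    assert (HH : (u i - u (s + k)%nat) ^ 2 <= INR m * dirichlet N u)
      by (apply sq_diff_le_dirichlet; unfold s; lia).
    apply abs_le_sqrt in HH. pose proof (Rabs_triang_inv (u i) (u (s + k)%nat)). lra. }
  rewrite rsum_const, rsum_plus, rsum_const in Hsum.
  assert (rsum (fun k => Rabs (u (s + k)%nat)) m <= l1norm N u).
  { apply (rsum_window_le (fun z => Rabs (u z))); [intros; apply Rabs_pos|unfold s; lia]. }
  lra.
Qed.

Lemma energy_le_l1norm N u m : (1 <= m)%nat -> (m <= S N)%nat ->
  energy N u <= l1norm N u * (l1norm N u / INR m + sqrt (INR m * dirichlet N u)).
Proof.
  intros Hm1 Hm2. assert (Hm : 0 < INR m) by (apply lt_0_INR; lia).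
  set (b := l1norm N u / INR m + sqrt (INR m * dirichlet N u)).
  assert (Hb : forall i, (i <= N)%nat -> Rabs (u i) <= b).
  { intros i Hi. pose proof (abs_le_window N u i m Hi Hm1 Hm2).
    apply Rmult_le_reg_l with (INR m); auto. unfold b.
    replace (INR m * (l1norm N u / INR m + sqrt (INR m * dirichlet N u)))
      with (l1norm N u + INR m * sqrt (INR m * dirichlet N u)) by (field; lra).
    lra. }
  unfold energy, l1norm. rewrite Rmult_comm, <- rsum_scal. apply rsum_le. intros k Hk.
  rewrite <- pow2_abs. pose proof (Hb k ltac:(lia)). pose proof (Rabs_pos (u k)). simpl. nra.
Qed.

Definition nash_rate (L0 Emax : R) : R := 9 / (16 * L0 ^ 2 * (4 * L0 ^ 2 + Emax)).

Lemma nash_rate_pos L0 Emax : 0 < L0 -> 0 < Emax -> 0 < nash_rate L0 Emax.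
Proof. intros. unfold nash_rate. apply Rdiv_lt_0_compat; [lra|apply Rmult_lt_0_compat; nra]. Qed.

Lemma nash_cube_le N u L0 Emax m : (1 <= m)%nat -> (m <= S N)%nat -> 0 < L0 -> 0 < Emax ->
  l1norm N u <= L0 -> energy N u <= Emax ->
  4 * L0 ^ 2 < INR m * energy N u -> INR m * energy N u <= 4 * L0 ^ 2 + energy N u ->
  nash_rate L0 Emax * energy N u ^ 3 <= dirichlet N u.
Proof.
  intros Hm1 HmN HL0 HEm HL HE Hlow Hhigh. set (E := energy N u) in *.
  pose proof (dirichlet_nonneg N u) as HD. pose proof (energy_nonneg N u) as HE0. fold E in HE0.
  pose proof (l1norm_nonneg N u) as HL1.
  pose proof (energy_le_l1norm N u m Hm1 HmN) as Hn. fold E in Hn.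
  assert (Hmp : 0 < INR m) by (apply lt_0_INR; lia).
  set (sq := sqrt (INR m * dirichlet N u)) in *.
  assert (Hsq : 0 <= sq) by apply sqrt_pos.
  assert (Hsq2 : sq * sq = INR m * dirichlet N u) by (apply sqrt_sqrt; apply Rmult_le_pos; lra).
  assert (HEsplit : E <= L0 * (L0 / INR m + sq)).
  { eapply Rle_trans; [apply Hn|]. apply Rmult_le_compat; auto.
    - apply Rplus_le_le_0_compat; auto. apply Rdiv_le_0_compat; lra.
    - apply Rplus_le_compat_r. apply Rmult_le_compat_r; auto.
      left; apply Rinv_0_lt_compat; lra. }
  assert (Hsmall : L0 * (L0 / INR m) <= E / 4).
  { apply Rmult_le_reg_l with (4 * INR m); [lra|].
    replace (4 * INR m * (L0 * (L0 / INR m))) with (4 * L0 ^ 2) by (field; lra). lra. }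
  assert (HEsq : 9 / 16 * E ^ 2 <= L0 ^ 2 * (INR m * dirichlet N u)).
  { rewrite <- Hsq2. assert (3 / 4 * E <= L0 * sq) by lra. nra. }
  assert (Hcube : 9 * E ^ 3 <= 16 * L0 ^ 2 * (4 * L0 ^ 2 + Emax) * dirichlet N u).
  { assert (9 / 16 * E ^ 2 * E <= L0 ^ 2 * (INR m * dirichlet N u) * E)
      by (apply Rmult_le_compat_r; lra).
    assert (L0 ^ 2 * (INR m * E) * dirichlet N u <= L0 ^ 2 * (4 * L0 ^ 2 + Emax) * dirichlet N u)
      by (apply Rmult_le_compat_r; auto; apply Rmult_le_compat_l; nra).
    nra. }
  assert (P : 0 < 16 * L0 ^ 2 * (4 * L0 ^ 2 + Emax)) by (apply Rmult_lt_0_compat; nra).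
  apply Rmult_le_reg_l with (16 * L0 ^ 2 * (4 * L0 ^ 2 + Emax)); auto.
  replace (16 * L0 ^ 2 * (4 * L0 ^ 2 + Emax) * (nash_rate L0 Emax * E ^ 3)) with (9 * E ^ 3)
    by (unfold nash_rate; field; nra).
  lra.
Qed.

Lemma sq_le_eps_of_mul_lt N E L : (1 <= N)%nat -> 0 <= E -> E * INR N < L ->
  E ^ 2 <= L ^ 2 * eps N ^ 2.
Proof.
  intros HN HE HEN. assert (HNp : 0 < INR N) by (apply lt_0_INR; lia).
  unfold eps. replace (E ^ 2) with ((E * INR N) ^ 2 * (/ INR N) ^ 2) by (field; lra).
  apply Rmult_le_compat_r; [apply pow2_ge_0|].
  apply pow_maj_Rabs. rewrite Rabs_right; nra.
Qed.

(** The window size [m ~ L0^2 / E] balances the two terms of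
    [energy_le_l1norm]; when it exceeds the lattice, [E] is already
    [O(eps N)] and the correction term dominates. *)
Lemma nash_inequality N u L0 Emax : (1 <= N)%nat -> 0 < L0 -> 0 < Emax ->
  l1norm N u <= L0 -> energy N u <= Emax ->
  let k := nash_rate L0 Emax in
  k * energy N u ^ 3 - k * (16 * L0 ^ 4 * eps N ^ 2) * energy N u <= dirichlet N u.
Proof.
  intros HN HL0 HEm HL HE k. set (E := energy N u) in *.
  assert (Hk : 0 < k) by (apply nash_rate_pos; auto).
  pose proof (dirichlet_nonneg N u) as HD. pose proof (energy_nonneg N u) as HE0. fold E in HE0.
  destruct (Req_dec E 0) as [Hz|Hz].
  { rewrite Hz. replace (k * 0 ^ 3 - k * (16 * L0 ^ 4 * eps N ^ 2) * 0) with 0 by ring. auto. }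
  assert (Epos : 0 < E) by lra.
  destruct (ceil_nat (4 * L0 ^ 2 / E)) as [m [Hm1 Hm2]]; [apply Rlt_le, Rdiv_lt_0_compat; nra|].
  assert (Hlow : 4 * L0 ^ 2 < INR m * E).
  { apply Rmult_lt_compat_r with (r := E) in Hm1; auto.
    replace (4 * L0 ^ 2 / E * E) with (4 * L0 ^ 2) in Hm1 by (field; lra). lra. }
  assert (Hhigh : INR m * E <= 4 * L0 ^ 2 + E).
  { apply Rmult_le_compat_r with (r := E) in Hm2; [|lra].
    replace ((4 * L0 ^ 2 / E + 1) * E) with (4 * L0 ^ 2 + E) in Hm2 by (field; lra). lra. }
  pose proof (pow2_ge_0 (eps N)).
  destruct (le_lt_dec m (S N)) as [HmN|HmN].
  - assert (Hm1n : (1 <= m)%nat) by (destruct m; [simpl in Hlow; nra|lia]).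
    pose proof (nash_cube_le N u L0 Emax m Hm1n HmN HL0 HEm HL HE Hlow Hhigh) as Hcube.
    assert (0 <= 16 * L0 ^ 4 * eps N ^ 2) by (pose proof (pow_le L0 4 ltac:(lra)); nra).
    assert (0 <= k * (16 * L0 ^ 4 * eps N ^ 2) * E)
      by (apply Rmult_le_pos; [apply Rmult_le_pos|]; lra).
    fold E k in Hcube. lra.
  - assert (HmN2 : INR (S N) + 1 <= INR m) by (rewrite <- S_INR; apply le_INR; lia).
    rewrite S_INR in HmN2.
    assert (HE2 : E ^ 2 <= (4 * L0 ^ 2) ^ 2 * eps N ^ 2)
      by (apply sq_le_eps_of_mul_lt; auto; nra).
    replace (k * E ^ 3 - k * (16 * L0 ^ 4 * eps N ^ 2) * E)
      with (k * E * (E ^ 2 - (4 * L0 ^ 2) ^ 2 * eps N ^ 2)) by ring.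
    assert (0 <= k * E) by nra. nra.
Qed.
Lemma boundary_sq_le N u i a k m : (i <= N)%nat -> (1 <= m)%nat ->
  8 * Rabs a + 1 <= INR k -> (k * m <= N)%nat -> INR N <= 2 * INR k * INR m ->
  Rabs a * eps N * u i ^ 2 <= 4 * Rabs a * INR k * eps N ^ 2 * energy N u + / 4 * dirichlet N u.
Proof.
  intros Hi Hm1 Hka H1 H2.
  assert (Hk1 : (1 <= k)%nat) by (destruct k; [simpl in Hka; pose proof (Rabs_pos a); lra|lia]).
  assert (Hm : 0 < INR m) by (apply lt_0_INR; lia).
  assert (HK : 0 < INR k) by (apply lt_0_INR; lia).
  assert (HN : 0 < INR N) by (apply lt_0_INR; nia).
  assert (Hkm : INR k * INR m <= INR N) by (rewrite <- mult_INR; apply le_INR; auto).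
  pose proof (sq_le_window N u i m Hi Hm1 ltac:(nia)) as Hw.
  pose proof (dirichlet_nonneg N u). pose proof (energy_nonneg N u). pose proof (Rabs_pos a).
  unfold eps. set (e := / INR N).
  assert (He : 0 < e) by (apply Rinv_0_lt_compat; lra).
  assert (Hu : u i ^ 2 <= 2 * energy N u / INR m + 2 * INR m * dirichlet N u).
  { apply Rmult_le_reg_l with (INR m); auto.
    replace (INR m * (2 * energy N u / INR m + 2 * INR m * dirichlet N u))
      with (2 * energy N u + 2 * INR m ^ 2 * dirichlet N u) by (field; lra). lra. }
  assert (Hi1 : / INR m <= 2 * INR k * e).
  { apply Rmult_le_reg_l with (INR m * INR N); [nra|]. unfold e.
    replace (INR m * INR N * / INR m) with (INR N) by (field; lra).
    replace (INR m * INR N * (2 * INR k * / INR N)) with (2 * INR k * INR m) by (field; lra).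
    lra. }
  assert (Hi2 : Rabs a * e * (2 * INR m) <= / 4).
  { apply Rmult_le_reg_l with (4 * INR N); [nra|]. unfold e.
    replace (4 * INR N * (Rabs a * / INR N * (2 * INR m))) with (8 * Rabs a * INR m)
      by (field; lra).
    nra. }
  assert (Hp : 0 <= Rabs a * e) by nra.
  assert (Rabs a * e * u i ^ 2
          <= Rabs a * e * (2 * energy N u / INR m + 2 * INR m * dirichlet N u))
    by (apply Rmult_le_compat_l; auto).
  assert (Rabs a * e * (2 * energy N u * / INR m)
          <= Rabs a * e * (2 * energy N u * (2 * INR k * e))).
  { apply Rmult_le_compat_l; auto. apply Rmult_le_compat_l; lra. }
  assert (Rabs a * e * (2 * INR m) * dirichlet N u <= / 4 * dirichlet N u)
    by (apply Rmult_le_compat_r; auto).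
  unfold Rdiv in *. nra.
Qed.

Lemma signed_le_abs a z : 0 <= z -> - (Rabs a * z) <= a * z.
Proof. intros Hz. pose proof (Rle_abs (- a)) as Ha. rewrite Rabs_Ropp in Ha. nra. Qed.

(** The Robin boundary terms, only [O(eps)] but of either sign, are absorbed
    into half of the Dirichlet form at the price of an [O(eps^2)] multiple of
    the energy. *)
Lemma Delta_coercive A B : exists c : R, exists N1 : nat, 0 < c /\
  forall N, (N1 <= N)%nat -> (1 <= N)%nat -> forall u,
    / 2 * dirichlet N u - c * eps N ^ 2 * energy N u <= - quadform N (Delta A B N) u.
Proof.
  set (K := Rabs A + Rabs B).
  assert (HK0 : 0 <= K) by (unfold K; pose proof (Rabs_pos A); pose proof (Rabs_pos B); lra).
  destruct (ceil_nat (8 * K + 1)) as [k [Hk1 Hk2]]; [lra|].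
  exists (4 * K * INR k + 1), (2 * k)%nat. split; [pose proof (pos_INR k); nra|].
  intros N HN1 HN u.
  assert (Hk0 : (k <> 0)%nat) by (intro; subst; simpl in Hk1; lra).
  set (m := (N / k)%nat).
  assert (Hm1 : (k * m <= N)%nat) by apply Nat.Div0.mul_div_le.
  assert (Hm2 : (N < k * S m)%nat) by (apply Nat.mul_succ_div_gt; auto).
  assert (Hm3 : (1 <= m)%nat) by nia.
  assert (R2 : INR N <= 2 * INR k * INR m).
  { assert (HNk : INR N <= INR k * INR (S m)) by (rewrite <- mult_INR; apply le_INR; lia).
    rewrite S_INR in HNk. assert (1 <= INR m) by (apply (le_INR 1); auto). nra. }
  assert (HA : 8 * Rabs A + 1 <= INR k) by (unfold K in Hk1; pose proof (Rabs_pos B); lra).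
  assert (HB : 8 * Rabs B + 1 <= INR k) by (unfold K in Hk1; pose proof (Rabs_pos A); lra).
  pose proof (boundary_sq_le N u 0 A k m ltac:(lia) Hm3 HA Hm1 R2) as B0.
  pose proof (boundary_sq_le N u N B k m ltac:(lia) Hm3 HB Hm1 R2) as BN.
  pose proof (eps_pos N HN) as He.
  pose proof (signed_le_abs A (eps N * u O ^ 2) ltac:(pose proof (pow2_ge_0 (u O)); nra)).
  pose proof (signed_le_abs B (eps N * u N ^ 2) ltac:(pose proof (pow2_ge_0 (u N)); nra)).
  pose proof (energy_nonneg N u). pose proof (pow2_ge_0 (eps N)).
  assert (0 <= eps N ^ 2 * energy N u) by (apply Rmult_le_pos; auto).
  rewrite quadform_Delta by auto. unfold K in *. nra.
Qed.

(** * The semigroup [exp (t G / 2)] as a power series in [t] *)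

Definition heat_coef (N : nat) (G : nat -> nat -> R) (x y : nat) (k : nat) : R :=
  matpow N G k x y / (2 ^ k * INR (Factorial.fact k)).
Definition heat_series (N : nat) (G : nat -> nat -> R) (t : R) (x y : nat) : R :=
  PSeries (heat_coef N G x y) t.

Lemma matmul_rsum N M1 M2 i j : matmul N M1 M2 i j = rsum (fun k => M1 i k * M2 k j) (S N).
Proof. apply sum_f_R0_rsum. Qed.

Lemma matpow_bound N G K k x y : 0 <= K -> (forall i j, Rabs (G i j) <= K) ->
  Rabs (matpow N G k x y) <= (INR (S N) * K) ^ k.
Proof.
  intros HK HG. revert x y. induction k; intros x y.
  - simpl. unfold idmat. destruct (Nat.eqb x y); rewrite ?Rabs_R1, ?Rabs_R0; lra.
  - simpl matpow. rewrite matmul_rsum.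
    assert (Hsum : Rabs (rsum (fun z => matpow N G k x z * G z y) (S N))
                   <= rsum (fun _ => (INR (S N) * K) ^ k * K) (S N)).
    { eapply Rle_trans; [apply rsum_abs|]. apply rsum_le. intros z _. rewrite Rabs_mult.
      apply Rmult_le_compat; auto; apply Rabs_pos. }
    rewrite rsum_const in Hsum. cbn [pow]. nra.
Qed.

Lemma matpow_nonneg N G k x y : (forall i j, 0 <= G i j) -> 0 <= matpow N G k x y.
Proof.
  intros H. revert x y. induction k; intros x y; simpl.
  - unfold idmat. destruct (Nat.eqb x y); lra.
  - rewrite matmul_rsum. apply rsum_nonneg. intros. apply Rmult_le_pos; auto.
Qed.

Lemma pow_div_fact_le_exp y n : 0 <= y -> y ^ n / INR (Factorial.fact n) <= exp y.
Proof.
  intros Hy. eapply Rle_trans; [|apply (exp_ge_taylor y n Hy)].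
  rewrite sum_f_R0_rsum. cbn [rsum].
  assert (0 <= rsum (fun k => y ^ k / INR (Factorial.fact k)) n).
  { apply rsum_nonneg. intros. apply Rdiv_le_0_compat; [apply pow_le; auto|].
    apply lt_0_INR, lt_O_fact. }
  lra.
Qed.

Section HeatSeries.
Variables (N : nat) (G : nat -> nat -> R) (K : R).
Hypothesis K_nonneg : 0 <= K.
Hypothesis G_bound : forall i j, Rabs (G i j) <= K.

Lemma heat_coef_radius x y t : Rbar_lt (Rabs t) (CV_radius (heat_coef N G x y)).
Proof.
  destruct (CV_radius_bounded (heat_coef N G x y)) as [Hub _].
  assert (Hr : Rbar_le (Rabs t + 1) (CV_radius (heat_coef N G x y))).
  { apply Hub. set (r := Rabs t + 1).
    assert (Hr : 0 <= r) by (unfold r; pose proof (Rabs_pos t); lra).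
    set (c := INR (S N) * K).
    assert (Hc : 0 <= c) by (unfold c; apply Rmult_le_pos; [apply pos_INR|auto]).
    exists (exp (c * r / 2)). intros n. unfold heat_coef.
    assert (Hf : 0 < INR (Factorial.fact n)) by (apply lt_0_INR, lt_O_fact).
    assert (H2 : 0 < 2 ^ n) by (apply pow_lt; lra).
    rewrite Rabs_mult, Rabs_div by nra.
    rewrite (Rabs_right (2 ^ n * INR (Factorial.fact n))) by nra.
    rewrite (Rabs_right (r ^ n)) by (apply Rle_ge, pow_le; auto).
    eapply Rle_trans; [|apply (pow_div_fact_le_exp (c * r / 2) n)];
      [|apply Rmult_le_pos; [apply Rmult_le_pos|]; lra].
    replace ((c * r / 2) ^ n / INR (Factorial.fact n))
      with (c ^ n / (2 ^ n * INR (Factorial.fact n)) * r ^ n)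
      by (unfold Rdiv; rewrite !Rpow_mult_distr, Rinv_mult, pow_inv; ring).
    apply Rmult_le_compat_r; [apply pow_le; auto|].
    unfold Rdiv. apply Rmult_le_compat_r; [left; apply Rinv_0_lt_compat; nra|].
    apply matpow_bound; auto. }
  destruct (CV_radius (heat_coef N G x y)); simpl in *; auto. lra.
Qed.

Lemma heat_series_correct x y t : is_pseries (heat_coef N G x y) t (heat_series N G t x y).
Proof. apply PSeries_correct, CV_radius_inside, heat_coef_radius. Qed.

Lemma heat_series_0 x y : heat_series N G 0 x y = idmat x y.
Proof. unfold heat_series. rewrite PSeries_0. unfold heat_coef. simpl. field. Qed.

Lemma heat_series_nonneg x y t : (forall i j, 0 <= G i j) -> 0 <= t ->
  0 <= heat_series N G t x y.
Proof.
  intros Hp Ht. pose proof (heat_series_correct x y t) as Hs.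
  apply is_pseries_R, is_series_Reals, is_lim_seq_Reals in Hs.
  assert (Rbar_le 0 (heat_series N G t x y)); [|auto].
  apply (is_lim_seq_le (fun _ => 0) (sum_f_R0 (fun n => heat_coef N G x y n * t ^ n)) 0 _); auto; [|apply is_lim_seq_const].
  intros n. rewrite sum_f_R0_rsum. apply rsum_nonneg. intros k _.
  apply Rmult_le_pos; [|apply pow_le; auto].
  apply Rdiv_le_0_compat; [apply matpow_nonneg; auto|].
  apply Rmult_lt_0_compat; [apply pow_lt; lra|apply lt_0_INR, lt_O_fact].
Qed.

Lemma is_pseries_rsum (c : nat -> nat -> R) (l g : nat -> R) t n :
  (forall z, (z < n)%nat -> is_pseries (c z) t (l z)) ->
  is_pseries (fun k => rsum (fun z => c z k * g z) n) t (rsum (fun z => l z * g z) n).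
Proof.
  induction n; intros H.
  - simpl. apply is_pseries_R, is_series_Reals. intros e He. exists O. intros m _.
    rewrite sum_f_R0_rsum, (rsum_ext _ (fun _ => 0)), rsum_const by (intros; ring).
    unfold R_dist. rewrite Rmult_0_r, Rminus_0_r, Rabs_R0. lra.
  - simpl. apply (is_pseries_ext (PS_plus (fun k => rsum (fun z => c z k * g z) n)
                                           (PS_scal (g n) (c n)))).
    { intros k. unfold PS_plus, PS_scal, plus, scal; simpl. unfold mult; simpl. ring. }
    replace (rsum (fun z => l z * g z) n + l n * g n)
      with (plus (rsum (fun z => l z * g z) n) (scal (g n) (l n)))
      by (unfold plus, scal; simpl; unfold mult; simpl; ring).
    apply (@is_pseries_plus R_AbsRing R_NormedModule); [apply IHn; intros; apply H; lia|].
    apply (@is_pseries_scal R_AbsRing R_NormedModule); [unfold mult; simpl; ring|].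
    apply H; lia.
Qed.

Lemma PS_derive_heat_coef x y k :
  PS_derive (heat_coef N G x y) k = / 2 * rsum (fun z => heat_coef N G x z k * G z y) (S N).
Proof.
  unfold PS_derive, heat_coef. simpl matpow. rewrite matmul_rsum.
  assert (Hf : 0 < INR (Factorial.fact k)) by (apply lt_0_INR, lt_O_fact).
  assert (H2 : 0 < 2 ^ k) by (apply pow_lt; lra).
  rewrite (rsum_ext (fun z => matpow N G k x z / (2 ^ k * INR (Factorial.fact k)) * G z y)
     (fun z => / (2 ^ k * INR (Factorial.fact k)) * (matpow N G k x z * G z y)))
     by (intros; unfold Rdiv; ring).
  rewrite rsum_scal. change (Factorial.fact (S k)) with (S k * Factorial.fact k)%nat.
  rewrite mult_INR. assert (0 < INR (S k)) by (apply lt_0_INR; lia).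
  simpl pow. field. repeat split; lra.
Qed.

Lemma heat_series_derive x y t :
  is_derive (fun t => heat_series N G t x y) t
            (/ 2 * rsum (fun z => heat_series N G t x z * G z y) (S N)).
Proof.
  replace (/ 2 * rsum (fun z => heat_series N G t x z * G z y) (S N))
    with (PSeries (PS_derive (heat_coef N G x y)) t).
  { apply is_derive_PSeries, heat_coef_radius. }
  apply is_pseries_unique.
  apply (is_pseries_ext (PS_scal (/ 2) (fun k => rsum (fun z => heat_coef N G x z k * G z y) (S N)))).
  { intros k. rewrite PS_derive_heat_coef. reflexivity. }
  change (/ 2 * rsum (fun z => heat_series N G t x z * G z y) (S N))
    with (scal (/ 2) (rsum (fun z => heat_series N G t x z * G z y) (S N))).
  apply (@is_pseries_scal R_AbsRing R_NormedModule); [unfold mult; simpl; ring|].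
  apply is_pseries_rsum. intros z _. apply heat_series_correct.
Qed.

End HeatSeries.

Lemma pR_heat_series A B N t x y : pR A B N t x y = heat_series N (Delta A B N) t x y.
Proof.
  assert (HU : Un_cv (expPartial A B N t x y) (heat_series N (Delta A B N) t x y)).
  { pose proof (heat_series_correct N (Delta A B N) (Delta_max A B N)
                  (Delta_max_nonneg A B N) (Delta_bound A B N) x y t) as Hs.
    apply is_pseries_R, is_series_Reals in Hs.
    eapply Un_cv_ext; [|exact Hs]. intros n. unfold expPartial.
    apply sum_eq. intros k _. unfold heat_coef.
    assert (0 < INR (Factorial.fact k)) by (apply lt_0_INR, lt_O_fact).
    assert (0 < 2 ^ k) by (apply pow_lt; lra).
    unfold Rdiv. rewrite Rpow_mult_distr, pow_inv. field. lra. }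
  unfold pR.
  match goal with |- proj1_sig ?p = _ => generalize (proj2_sig p); generalize (proj1_sig p) end.
  intros l [Hl|[Hn _]].
  - eapply UL_sequence; eauto.
  - exfalso. apply Hn. eauto.
Qed.

Lemma is_derive_eq (f : R -> R) (x l l' : R) : l = l' -> is_derive f x l -> is_derive f x l'.
Proof. intros ->; auto. Qed.

Lemma is_derive_Rplus (f g : R -> R) x df dg : is_derive f x df -> is_derive g x dg ->
  is_derive (fun t => f t + g t) x (df + dg).
Proof. intros. apply (@is_derive_plus R_AbsRing R_NormedModule); auto. Qed.

Lemma is_derive_Rminus (f g : R -> R) x df dg : is_derive f x df -> is_derive g x dg ->
  is_derive (fun t => f t - g t) x (df - dg).
Proof. intros. apply (@is_derive_minus R_AbsRing R_NormedModule); auto. Qed.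

Lemma is_derive_Rmult (f g : R -> R) x df dg : is_derive f x df -> is_derive g x dg ->
  is_derive (fun t => f t * g t) x (df * g x + f x * dg).
Proof. intros. apply (@is_derive_mult R_AbsRing); auto. intros; apply Rmult_comm. Qed.

Lemma is_derive_Rconst (c x : R) : is_derive (fun _ => c) x 0.
Proof. apply (@is_derive_const R_AbsRing R_NormedModule). Qed.

Lemma is_derive_Rlinear (k x : R) : is_derive (fun t => k * t) x k.
Proof.
  eapply is_derive_eq; [|apply is_derive_scal, (@is_derive_id R_AbsRing)].
  simpl; unfold one; simpl; ring.
Qed.

Lemma is_derive_exp_linear k x : is_derive (fun t => exp (k * t)) x (k * exp (k * x)).
Proof.
  eapply is_derive_eq;
    [|apply (@is_derive_comp R_AbsRing R_NormedModule exp (fun t => k * t) x (exp (k * x)) k);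
      [apply is_derive_exp|apply is_derive_Rlinear]].
  simpl; unfold scal; simpl; unfold mult; simpl; ring.
Qed.

Lemma is_derive_rsum (f : nat -> R -> R) (d : nat -> R) x n :
  (forall k, (k < n)%nat -> is_derive (f k) x (d k)) ->
  is_derive (fun t => rsum (fun k => f k t) n) x (rsum d n).
Proof.
  induction n; intros H; simpl; [apply is_derive_Rconst|].
  apply is_derive_Rplus; [apply IHn; intros; apply H; lia|apply H; lia].
Qed.

Lemma MVT_is_derive (f f' : R -> R) a b : a < b ->
  (forall c, a <= c <= b -> is_derive f c (f' c)) ->
  exists c, a < c < b /\ f b - f a = f' c * (b - a).
Proof.
  intros Hab H. destruct (MVT_cor2 f f' a b Hab) as [c [Hc1 Hc2]].
  - intros c Hc. apply is_derive_Reals. auto.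
  - exists c; split; auto.
Qed.

Lemma derive_nonpos_antitone (f f' : R -> R) a b : a <= b ->
  (forall c, a <= c <= b -> is_derive f c (f' c)) ->
  (forall c, a <= c <= b -> f' c <= 0) -> f b <= f a.
Proof.
  intros Hab H H'. destruct (Req_dec a b); [subst; lra|].
  destruct (MVT_is_derive f f' a b) as [c [Hc1 Hc2]]; auto; [lra|].
  assert (f' c <= 0) by (apply H'; lra). nra.
Qed.

Lemma derive_nonneg_monotone (f f' : R -> R) a b : a <= b ->
  (forall c, a <= c <= b -> is_derive f c (f' c)) ->
  (forall c, a <= c <= b -> 0 <= f' c) -> f a <= f b.
Proof.
  intros Hab H H'.
  enough (- f b <= - f a) by lra.
  apply (derive_nonpos_antitone (fun r => - f r) (fun r => - f' r) a b Hab).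
  - intros c Hc. apply (@is_derive_opp R_AbsRing R_NormedModule); auto.
  - intros c Hc. specialize (H' c Hc). lra.
Qed.

Lemma exp_le x y : x <= y -> exp x <= exp y.
Proof. intros H. destruct (Req_dec x y); [subst; lra|]. left; apply exp_increasing; lra. Qed.

(** [1 / G^2] grows at rate at least [2 k]. *)
Lemma cubic_subsolution_bound (G dG : R -> R) k t : 0 < k -> 0 < t ->
  (forall r, 0 <= r <= t -> is_derive G r (dG r)) -> (forall r, 0 <= r <= t -> 0 <= G r) ->
  G 0 = 1 -> (forall r, 0 <= r <= t -> dG r <= - k * G r ^ 3) ->
  G t ^ 2 * t <= / (2 * k).
Proof.
  intros Hk Ht HdG HG0 Hinit Hineq.
  destruct (Req_dec (G t) 0) as [Z|Z].
  { rewrite Z. replace (0 ^ 2 * t) with 0 by ring. left; apply Rinv_0_lt_compat; lra. }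
  assert (HGt : 0 < G t) by (pose proof (HG0 t ltac:(lra)); lra).
  assert (Gmono : forall r, 0 <= r <= t -> G t <= G r).
  { intros r Hr. apply (derive_nonpos_antitone G dG r t); [lra| intros; apply HdG; lra|].
    intros c Hc. pose proof (Hineq c ltac:(lra)). pose proof (HG0 c ltac:(lra)).
    assert (0 <= k * G c ^ 3) by (apply Rmult_le_pos; [lra|apply pow_le; auto]). lra. }
  set (invsq := fun r => / (G r ^ 2)).
  assert (HdH : forall r, 0 <= r <= t ->
            is_derive invsq r (- (INR 2 * dG r * G r ^ 1) / (G r ^ 2) ^ 2)).
  { intros r Hr. apply (is_derive_inv (fun r => G r ^ 2)); [apply is_derive_pow, HdG; auto|].
    pose proof (Gmono r Hr). apply pow_nonzero. lra. }
  assert (HH : invsq 0 - 2 * k * 0 <= invsq t - 2 * k * t).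
  { apply (derive_nonneg_monotone (fun r => invsq r - 2 * k * r)
             (fun r => - (INR 2 * dG r * G r ^ 1) / (G r ^ 2) ^ 2 - 2 * k) 0 t); [lra| |].
    - intros c Hc. apply is_derive_Rminus; [apply HdH; auto|apply is_derive_Rlinear].
    - intros c Hc. pose proof (Gmono c Hc). pose proof (Hineq c Hc). set (g := G c) in *.
      simpl INR.
      replace (- ((1 + 1) * dG c * g ^ 1) / (g ^ 2) ^ 2 - 2 * k)
        with (2 * (- dG c - k * g ^ 3) / g ^ 3) by (field; lra).
      apply Rdiv_le_0_compat; [lra|apply pow_lt; lra]. }
  unfold invsq in HH. rewrite Hinit in HH. replace (/ (1 ^ 2)) with 1 in HH by (simpl; field).
  assert (HGt2 : 0 < G t ^ 2) by (apply pow_lt; auto).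
  assert (Hinv : 2 * k * t * G t ^ 2 <= 1).
  { replace 1 with (/ G t ^ 2 * G t ^ 2) by (field; lra). apply Rmult_le_compat_r; lra. }
  apply Rmult_le_reg_l with (2 * k); [lra|]. rewrite Rinv_r by lra. nra.
Qed.

Lemma cubic_decay_ode (E dE : R -> R) k rho t : 0 < k -> 0 <= rho -> 0 < t ->
  (forall r, 0 <= r <= t -> is_derive E r (dE r)) -> (forall r, 0 <= r <= t -> 0 <= E r) ->
  E 0 = 1 -> (forall r, 0 <= r <= t -> dE r <= - k * E r ^ 3 + rho * E r) ->
  E t ^ 2 * t <= exp (2 * rho * t) / (2 * k).
Proof.
  intros Hk Hr Ht HdE HE0 Hinit Hineq.
  set (G := fun r => exp (- rho * r) * E r).
  assert (HG : G t ^ 2 * t <= / (2 * k)).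
  { apply (cubic_subsolution_bound G
             (fun r => - rho * exp (- rho * r) * E r + exp (- rho * r) * dE r) k t); auto.
    - intros r Hr'. apply (is_derive_Rmult (fun r => exp (- rho * r)) E);
        [apply is_derive_exp_linear|auto].
    - intros r Hr'. unfold G. apply Rmult_le_pos; [left; apply exp_pos|auto].
    - unfold G. rewrite Rmult_0_r, exp_0, Hinit. ring.
    - intros r Hr'. unfold G. specialize (Hineq r Hr'). specialize (HE0 r Hr').
      pose proof (exp_pos (- rho * r)) as Hp.
      assert (Hp1 : exp (- rho * r) <= 1) by (rewrite <- exp_0; apply exp_le; nra).
      assert (exp (- rho * r) * dE r <= exp (- rho * r) * (- k * E r ^ 3 + rho * E r))
        by (apply Rmult_le_compat_l; lra).
      assert (exp (- rho * r) ^ 3 <= exp (- rho * r)).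
      { assert (exp (- rho * r) * exp (- rho * r) <= 1) by nra. simpl. nra. }
      assert (0 <= k * E r ^ 3) by (apply Rmult_le_pos; [lra|apply pow_le; auto]).
      replace ((exp (- rho * r) * E r) ^ 3) with (exp (- rho * r) ^ 3 * E r ^ 3) by ring.
      nra. }
  assert (HE : E t = exp (rho * t) * G t).
  { unfold G. rewrite <- Rmult_assoc, <- exp_plus.
    replace (rho * t + - rho * t) with 0 by ring. rewrite exp_0; ring. }
  rewrite HE. replace ((exp (rho * t) * G t) ^ 2 * t) with (exp (rho * t) ^ 2 * (G t ^ 2 * t)) by ring.
  replace (exp (2 * rho * t) / (2 * k)) with (exp (rho * t) ^ 2 * / (2 * k))
    by (replace (2 * rho * t) with (rho * t + rho * t) by ring; rewrite exp_plus; unfold Rdiv; ring).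
  apply Rmult_le_compat_l; auto. apply pow2_ge_0.
Qed.

(** * Solutions of [w' = w M / 2] *)

Definition heat_flow (N : nat) (M : nat -> nat -> R) (w : R -> nat -> R) : Prop :=
  forall y t, (y <= N)%nat -> is_derive (fun s => w s y) t (/ 2 * vecmat N M (w t) y).

Definition symmetric_on (N : nat) (M : nat -> nat -> R) : Prop :=
  forall i j, (i <= N)%nat -> (j <= N)%nat -> M i j = M j i.

Lemma heat_flow_lin N M w1 w2 c1 c2 : heat_flow N M w1 -> heat_flow N M w2 ->
  heat_flow N M (fun t y => c1 * w1 t y + c2 * w2 t y).
Proof.
  intros H1 H2 y t Hy. rewrite vecmat_lin.
  eapply is_derive_eq; [|apply is_derive_Rplus; apply is_derive_scal; [apply H1|apply H2]; auto].
  ring.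
Qed.

Section HeatFlow.
Variables (N : nat) (M : nat -> nat -> R) (w : R -> nat -> R).
Hypothesis w_flow : heat_flow N M w.
Hypothesis M_sym : symmetric_on N M.

Lemma heat_flow_vecmat : heat_flow N M (fun t y => vecmat N M (w t) y).
Proof.
  intros y t Hy. unfold vecmat at 1.
  eapply is_derive_eq;
    [|apply (is_derive_rsum (fun z s => w s z * M z y) (fun z => / 2 * vecmat N M (w t) z * M z y))].
  - unfold vecmat at 2. rewrite <- rsum_scal. apply rsum_ext. intros; ring.
  - intros k Hk. eapply is_derive_eq;
      [|apply is_derive_Rmult; [apply w_flow; lia|apply is_derive_Rconst]].
    cbv beta. ring.
Qed.

Lemma energy_derive t : is_derive (fun s => energy N (w s)) t (quadform N M (w t)).
Proof.
  unfold energy, quadform.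
  apply (is_derive_rsum (fun z s => w s z ^ 2) (fun z => w t z * vecmat N M (w t) z)).
  intros k Hk. eapply is_derive_eq; [|apply is_derive_pow; apply w_flow; lia]. simpl. field.
Qed.

Lemma weighted_sum_derive (f : nat -> R) t :
  is_derive (fun s => rsum (fun z => w s z * f z) (S N)) t
            (/ 2 * rsum (fun u => w t u * vecmat N M f u) (S N)).
Proof.
  eapply is_derive_eq;
    [|apply (is_derive_rsum (fun z s => w s z * f z) (fun z => / 2 * vecmat N M (w t) z * f z))].
  2:{ intros k Hk. eapply is_derive_eq;
        [|apply is_derive_Rmult; [apply w_flow; lia|apply is_derive_Rconst]].
      cbv beta; ring. }
  rewrite <- rsum_scal. unfold vecmat.
  rewrite (rsum_ext _ (fun z => rsum (fun u => / 2 * (w t u * (f z * M z u))) (S N))).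
  2:{ intros z Hz. rewrite <- !rsum_scal, Rmult_comm, <- rsum_scal. apply rsum_ext.
      intros u Hu. rewrite M_sym by lia. ring. }
  rewrite rsum_swap. apply rsum_ext. intros u Hu. rewrite <- !rsum_scal. apply rsum_ext.
  intros; ring.
Qed.

Lemma quadform_derive t :
  is_derive (fun s => quadform N M (w s)) t (energy N (fun y => vecmat N M (w t) y)).
Proof.
  unfold quadform.
  eapply is_derive_eq; [|apply (is_derive_rsum (fun y s => w s y * vecmat N M (w s) y)
     (fun y => / 2 * vecmat N M (w t) y * vecmat N M (w t) y
               + w t y * (/ 2 * vecmat N M (fun z => vecmat N M (w t) z) y)))].
  2:{ intros k Hk. apply is_derive_Rmult; [apply w_flow; lia|apply (heat_flow_vecmat k t); lia]. }
  rewrite rsum_plus. unfold energy.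
  assert (Hsw : rsum (fun y => w t y * (/ 2 * vecmat N M (fun z => vecmat N M (w t) z) y)) (S N)
                = / 2 * rsum (fun z => vecmat N M (w t) z ^ 2) (S N)).
  { rewrite <- rsum_scal. unfold vecmat at 1.
    rewrite (rsum_ext _ (fun y => rsum (fun z => / 2 * (vecmat N M (w t) z * (w t y * M y z))) (S N))).
    2:{ intros y Hy. rewrite <- !rsum_scal. apply rsum_ext. intros z Hz. rewrite M_sym by lia. ring. }
    rewrite rsum_swap. apply rsum_ext. intros z Hz. rewrite !rsum_scal. unfold vecmat. simpl. ring. }
  rewrite Hsw, <- rsum_scal, <- rsum_plus. apply rsum_ext. intros. field.
Qed.

Lemma energy_gronwall c s t : (forall u, quadform N M u <= c * energy N u) -> s <= t ->
  energy N (w t) <= exp (c * (t - s)) * energy N (w s).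
Proof.
  intros Hc Hst.
  assert (Hdecr : exp (- c * t) * energy N (w t) <= exp (- c * s) * energy N (w s)).
  { apply (derive_nonpos_antitone (fun r => exp (- c * r) * energy N (w r))
      (fun r => (- c * exp (- c * r)) * energy N (w r) + exp (- c * r) * quadform N M (w r))
      s t Hst).
    - intros r _. apply (is_derive_Rmult (fun r => exp (- c * r)) (fun r => energy N (w r)));
        [apply is_derive_exp_linear|apply energy_derive].
    - intros r _. pose proof (Hc (w r)). pose proof (exp_pos (- c * r)).
      assert (exp (- c * r) * quadform N M (w r) <= exp (- c * r) * (c * energy N (w r)))
        by (apply Rmult_le_compat_l; lra).
      lra. }
  replace (energy N (w t)) with (exp (c * t) * (exp (- c * t) * energy N (w t)))
    by (rewrite <- Rmult_assoc, <- exp_plus; replace (c * t + - c * t) with 0 by ring;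
        rewrite exp_0; ring).
  replace (exp (c * (t - s)) * energy N (w s)) with (exp (c * t) * (exp (- c * s) * energy N (w s)))
    by (rewrite <- Rmult_assoc, <- exp_plus; replace (c * t + - c * s) with (c * (t - s)) by ring;
        reflexivity).
  apply Rmult_le_compat_l; [left; apply exp_pos|exact Hdecr].
Qed.

(** [quadform] is nondecreasing along the flow (its derivative is an energy),
    so the energy dissipated on [[s, t]] controls [- quadform] at time [t]. *)
Lemma dissipation_bound s t : 0 <= s < t ->
  - quadform N M (w t) * (t - s) <= energy N (w s) - energy N (w t).
Proof.
  intros Hst.
  destruct (MVT_is_derive (fun r => energy N (w r)) (fun r => quadform N M (w r)) s t)
    as [xi [Hxi Heq]]; [lra|intros; apply energy_derive|].
  assert (quadform N M (w xi) <= quadform N M (w t)).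
  { apply (derive_nonneg_monotone (fun r => quadform N M (w r))
             (fun r => energy N (fun y => vecmat N M (w r) y))); [lra| |].
    - intros c _. apply quadform_derive.
    - intros; apply energy_nonneg. }
  assert (quadform N M (w xi) * (t - s) <= quadform N M (w t) * (t - s))
    by (apply Rmult_le_compat_r; lra).
  lra.
Qed.

End HeatFlow.

Lemma vecmat_energy_bound N M w c s t : heat_flow N M w -> symmetric_on N M ->
  (forall u, quadform N M u <= c * energy N u) -> 0 <= c -> 0 <= s < t ->
  energy N (fun y => vecmat N M (w t) y) * (t - s)
  <= exp (c * (t - s)) * (quadform N M (w t) - quadform N M (w s)).
Proof.
  intros Hw Hsym Hc Hc0 Hst.
  destruct (MVT_is_derive (fun r => quadform N M (w r))
              (fun r => energy N (fun y => vecmat N M (w r) y)) s t) as [xi [Hxi Heq]];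
    [lra|intros; apply quadform_derive; auto|].
  pose proof (energy_gronwall N M _ (heat_flow_vecmat N M w Hw) c xi t Hc ltac:(lra)) as HG.
  assert (exp (c * (t - xi)) <= exp (c * (t - s))) by (apply exp_le; nra).
  pose proof (energy_nonneg N (fun y => vecmat N M (w xi) y)).
  assert (energy N (fun y => vecmat N M (w t) y)
          <= exp (c * (t - s)) * energy N (fun y => vecmat N M (w xi) y)) by nra.
  rewrite Heq. assert (0 < t - s) by lra. nra.
Qed.

Lemma Delta_symmetric A B N : symmetric_on N (Delta A B N).
Proof. intros i j _ _. apply Delta_sym. Qed.

Lemma pR_heat_flow A B N x : heat_flow N (Delta A B N) (fun t y => pR A B N t x y).
Proof.
  intros y t Hy.
  apply (is_derive_ext (fun s => heat_series N (Delta A B N) s x y));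
    [intros; symmetry; apply pR_heat_series|].
  eapply is_derive_eq; [|apply (heat_series_derive N (Delta A B N) (Delta_max A B N)
                              (Delta_max_nonneg A B N) (Delta_bound A B N))].
  unfold vecmat. f_equal. apply rsum_ext. intros z _. rewrite pR_heat_series. reflexivity.
Qed.

Lemma pR_0 A B N x y : pR A B N 0 x y = idmat x y.
Proof. rewrite pR_heat_series. apply heat_series_0. Qed.

Lemma energy_pR_0 A B N x : (x <= N)%nat -> energy N (fun z => pR A B N 0 x z) = 1.
Proof.
  intros Hx. unfold energy. rewrite (rsum_ext _ (fun z => 1 * idmat z x)).
  - rewrite rsum_idmat. destruct (Nat.ltb_spec x (S N)); [ring|lia].
  - intros z _. rewrite pR_0. unfold idmat. rewrite Nat.eqb_sym. destruct (Nat.eqb z x); ring.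
Qed.

Lemma weighted_sum_pR_0 A B N x f : (x <= N)%nat ->
  rsum (fun z => pR A B N 0 x z * f z) (S N) = f x.
Proof.
  intros Hx. rewrite (rsum_ext _ (fun z => f z * idmat z x)).
  - rewrite rsum_idmat. destruct (Nat.ltb_spec x (S N)); [reflexivity|lia].
  - intros z _. rewrite pR_0. unfold idmat. rewrite Nat.eqb_sym. destruct (Nat.eqb z x); ring.
Qed.

Lemma quadform_Delta_le A B N u : (1 <= N)%nat ->
  quadform N (Delta A B N) u <= (Rabs A + Rabs B) * eps N * energy N u.
Proof.
  intros HN. rewrite quadform_Delta by auto.
  pose proof (eps_pos N HN) as He.
  pose proof (signed_le_abs A (eps N * u O ^ 2) ltac:(pose proof (pow2_ge_0 (u O)); nra)).
  pose proof (signed_le_abs B (eps N * u N ^ 2) ltac:(pose proof (pow2_ge_0 (u N)); nra)).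
  pose proof (sq_le_energy N u O ltac:(lia)). pose proof (sq_le_energy N u N ltac:(lia)).
  pose proof (dirichlet_nonneg N u). pose proof (Rabs_pos A). pose proof (Rabs_pos B).
  assert (Rabs A * (eps N * u O ^ 2) <= Rabs A * (eps N * energy N u))
    by (apply Rmult_le_compat_l; nra).
  assert (Rabs B * (eps N * u N ^ 2) <= Rabs B * (eps N * energy N u))
    by (apply Rmult_le_compat_l; nra).
  nra.
Qed.

Lemma heat_flow_zero N M w c t : heat_flow N M w ->
  (forall u, quadform N M u <= c * energy N u) -> energy N (w 0) = 0 -> 0 <= t ->
  forall y, (y <= N)%nat -> w t y = 0.
Proof.
  intros Hw Hc Hinit Ht y Hy.
  pose proof (energy_gronwall N M w Hw c 0 t Hc Ht) as HG. rewrite Hinit, Rmult_0_r in HG.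
  pose proof (sq_le_energy N (w t) y Hy). pose proof (pow2_ge_0 (w t y)). nra.
Qed.

(** Positivity of [pR]: [Delta + Delta_max I] has nonnegative entries, and
    [exp (t Delta / 2) = exp (- t Delta_max / 2) exp (t (Delta + Delta_max I) / 2)]
    by uniqueness for the flow. *)
Definition Delta_shift (A B : R) (N : nat) (i j : nat) : R :=
  Delta A B N i j + Delta_max A B N * idmat i j.

Lemma Delta_shift_nonneg A B N i j : 0 <= Delta_shift A B N i j.
Proof.
  unfold Delta_shift, idmat. destruct (Nat.eqb_spec i j).
  - subst. pose proof (Delta_bound A B N j j).
    pose proof (Rle_abs (- Delta A B N j j)) as Hle. rewrite Rabs_Ropp in Hle. lra.
  - pose proof (Delta_offdiag_nonneg A B N i j n). lra.
Qed.

Lemma Delta_shift_bound A B N i j : Rabs (Delta_shift A B N i j) <= 2 * Delta_max A B N.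
Proof.
  unfold Delta_shift, idmat. pose proof (Delta_bound A B N i j). pose proof (Delta_max_nonneg A B N).
  destruct (Nat.eqb i j).
  - eapply Rle_trans; [apply Rabs_triang|].
    rewrite Rmult_1_r, (Rabs_right (Delta_max A B N)) by lra. lra.
  - rewrite Rmult_0_r, Rplus_0_r. lra.
Qed.

Lemma vecmat_Delta_shift A B N u y : (y <= N)%nat ->
  vecmat N (Delta_shift A B N) u y = vecmat N (Delta A B N) u y + Delta_max A B N * u y.
Proof.
  intros Hy. unfold vecmat, Delta_shift.
  rewrite (rsum_ext _ (fun z => u z * Delta A B N z y + Delta_max A B N * (u z * idmat z y)))
    by (intros; ring).
  rewrite rsum_plus, rsum_scal, rsum_idmat. destruct (Nat.ltb_spec y (S N)); [reflexivity|lia].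
Qed.

Lemma shifted_heat_flow A B N x : heat_flow N (Delta A B N)
  (fun t y => exp (- (Delta_max A B N / 2) * t) * heat_series N (Delta_shift A B N) t x y).
Proof.
  intros y t Hy. pose proof (Delta_max_nonneg A B N).
  eapply is_derive_eq; [|apply is_derive_Rmult; [apply is_derive_exp_linear|
    apply (heat_series_derive N (Delta_shift A B N) (2 * Delta_max A B N)); [lra|apply Delta_shift_bound]]].
  change (rsum (fun z => heat_series N (Delta_shift A B N) t x z * Delta_shift A B N z y) (S N))
    with (vecmat N (Delta_shift A B N) (fun z => heat_series N (Delta_shift A B N) t x z) y).
  rewrite vecmat_Delta_shift by auto.
  replace (vecmat N (Delta A B N)
             (fun z => exp (- (Delta_max A B N / 2) * t) * heat_series N (Delta_shift A B N) t x z) y)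
    with (exp (- (Delta_max A B N / 2) * t)
          * vecmat N (Delta A B N) (fun z => heat_series N (Delta_shift A B N) t x z) y)
    by (unfold vecmat; rewrite <- rsum_scal; apply rsum_ext; intros; ring).
  field.
Qed.

Lemma pR_nonneg A B N t x y : (1 <= N)%nat -> (y <= N)%nat -> 0 <= t -> 0 <= pR A B N t x y.
Proof.
  intros HN Hy Ht.
  set (h := fun t y => exp (- (Delta_max A B N / 2) * t) * heat_series N (Delta_shift A B N) t x y).
  set (g := fun t y => 1 * pR A B N t x y + (-1) * h t y).
  assert (Hg0 : energy N (g 0) = 0).
  { unfold energy. rewrite (rsum_ext _ (fun _ => 0)); [rewrite rsum_const; ring|].
    intros z _. unfold g, h. rewrite pR_0, heat_series_0, Rmult_0_r, exp_0. ring. }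
  pose proof (heat_flow_zero N (Delta A B N) g _ t
                (heat_flow_lin N _ _ _ 1 (-1) (pR_heat_flow A B N x) (shifted_heat_flow A B N x))
                (fun u => quadform_Delta_le A B N u HN) Hg0 Ht y Hy) as Hz.
  assert (0 <= h t y).
  { apply Rmult_le_pos; [left; apply exp_pos|].
    apply (heat_series_nonneg N _ (2 * Delta_max A B N)); auto.
    - pose proof (Delta_max_nonneg A B N); lra.
    - apply Delta_shift_bound.
    - apply Delta_shift_nonneg. }
  unfold g in Hz. lra.
Qed.

Lemma Bernoulli_ineq x n : 0 <= x -> 1 + INR n * x <= (1 + x) ^ n.
Proof.
  intros Hx. induction n; [simpl; lra|]. rewrite S_INR. cbn [pow].
  assert (0 <= INR n * x * x) by (pose proof (pos_INR n); apply Rmult_le_pos; nra). nra.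
Qed.

Lemma pow_le_exp y n : 0 <= y -> (1 + y) ^ n <= exp (INR n * y).
Proof.
  intros Hy. induction n; [simpl; rewrite Rmult_0_l, exp_0; lra|].
  rewrite S_INR. cbn [pow]. replace ((INR n + 1) * y) with (y + INR n * y) by ring.
  rewrite exp_plus. apply Rmult_le_compat; try lra; [apply pow_le; lra|apply exp_ineq1_le].
Qed.

Lemma pow_le_pow_of_le q z n : 0 <= q <= 1 -> (z <= n)%nat -> q ^ n <= q ^ z.
Proof.
  intros Hq Hz. replace n with (z + (n - z))%nat by lia. rewrite pow_add.
  assert (0 <= q ^ z) by (apply pow_le; lra).
  assert (q ^ (n - z) <= 1) by (rewrite <- (pow1 (n - z)); apply pow_incr; lra).
  assert (0 <= q ^ (n - z)) by (apply pow_le; lra). nra.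
Qed.

(** * An [l1] bound through a Robin supersolution *)

Definition robin_weight (N : nat) (q : R) (z : nat) : R := q ^ z + q ^ (N - z).

Section RobinWeight.
Variables (A B a : R) (N : nat).
Hypotheses (N_ge2 : (2 <= N)%nat) (a_ge4 : 4 <= a) (aN : 2 * a <= INR N).
Hypotheses (A_le : 4 * Rabs A <= a) (B_le : 4 * Rabs B <= a).

Let q := 1 - a * eps N.

Lemma ratio_bounds : 1 / 2 <= q < 1.
Proof.
  pose proof (eps_pos N ltac:(lia)). unfold q, eps in *.
  assert (a * / INR N <= 1 / 2) by (apply Rmult_le_reg_l with (INR N); [lra|field_simplify; lra]).
  nra.
Qed.

Lemma ratio_pow_le_half : q ^ (N - 1) <= 1 / 2.
Proof.
  pose proof (eps_pos N ltac:(lia)). pose proof ratio_bounds. set (x := a * eps N).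
  assert (Hx : x * INR N = a) by (unfold x, eps; field; lra).
  assert (Hq : q <= / (1 + x)).
  { apply Rmult_le_reg_l with (1 + x); [nra|]. rewrite Rinv_r by nra. unfold q. fold x. nra. }
  assert (Hb : 1 + INR (N - 1) * x <= (1 + x) ^ (N - 1)) by (apply Bernoulli_ineq; nra).
  rewrite minus_INR in Hb by lia. simpl INR in Hb.
  assert (Hb2 : 3 <= (1 + x) ^ (N - 1)) by nra.
  eapply Rle_trans; [apply pow_incr with (y := / (1 + x)); lra|].
  rewrite pow_inv. apply Rmult_le_reg_l with ((1 + x) ^ (N - 1)); [lra|].
  rewrite Rinv_r by lra. lra.
Qed.

Lemma exp_le_ratio_pow : exp (- 2 * a) <= q ^ N.
Proof.
  pose proof (eps_pos N ltac:(lia)). pose proof ratio_bounds. set (x := a * eps N).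
  assert (Hx : x * INR N = a) by (unfold x, eps; field; lra).
  assert (Hq : / (1 + 2 * x) <= q).
  { apply Rmult_le_reg_l with (1 + 2 * x); [nra|]. rewrite Rinv_r by nra. unfold q. fold x. nra. }
  eapply Rle_trans; [|apply pow_incr with (x := / (1 + 2 * x)); split;
                        [left; apply Rinv_0_lt_compat; nra|exact Hq]].
  rewrite pow_inv. assert (He : (1 + 2 * x) ^ N <= exp (INR N * (2 * x))) by (apply pow_le_exp; nra).
  replace (INR N * (2 * x)) with (2 * a) in He by lra.
  replace (- 2 * a) with (- (2 * a)) by ring. rewrite exp_Ropp.
  apply Rinv_le_contravar; auto. apply pow_lt; nra.
Qed.

(** At an endpoint the drift [-(a eps)(1 - q^(N-1))] of [q^z] towards the
    boundary dominates the Robin term [A eps], since [|A| <= a/4]. *)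
Lemma robin_boundary_ineq A' s : 4 * Rabs A' <= a -> 0 <= s <= 1 / 2 ->
  - (a * eps N) * (1 - s) - A' * eps N * (1 + q * s) <= 2 * (a * eps N) ^ 2 * (1 + q * s).
Proof.
  intros HA' Hs. pose proof (eps_pos N ltac:(lia)). pose proof ratio_bounds.
  pose proof (Rle_abs (- A')) as HA. rewrite Rabs_Ropp in HA.
  assert (0 <= q * s <= 1) by (split; nra).
  assert (- A' * eps N * (1 + q * s) <= 2 * Rabs A' * eps N).
  { assert (- A' * (eps N * (1 + q * s)) <= Rabs A' * (eps N * (1 + q * s)))
      by (apply Rmult_le_compat_r; nra).
    assert (Rabs A' * (eps N * (1 + q * s)) <= Rabs A' * (2 * eps N))
      by (apply Rmult_le_compat_l; [apply Rabs_pos|nra]).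
    lra. }
  assert (0 <= 2 * (a * eps N) ^ 2 * (1 + q * s)) by (pose proof (pow2_ge_0 (a * eps N)); nra).
  assert (0 <= a * eps N) by nra.
  assert (a * eps N * (1 - s) >= a * eps N / 2) by nra.
  assert (2 * Rabs A' * eps N <= a * eps N / 2) by nra.
  lra.
Qed.

Lemma robin_weight_supersolution y : (y <= N)%nat ->
  vecmat N (Delta A B N) (robin_weight N q) y <= 2 * (a * eps N) ^ 2 * robin_weight N q y.
Proof.
  intros Hy. pose proof ratio_bounds. pose proof ratio_pow_le_half.
  assert (Hae : a * eps N = 1 - q) by (unfold q; ring).
  assert (Hs0 : 0 <= q ^ (N - 1)) by (apply pow_le; lra).
  assert (HqN : q ^ N = q * q ^ (N - 1)) by (replace N with (S (N - 1)) at 1 by lia; reflexivity).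
  rewrite vecmat_Delta by lia. unfold robin_weight.
  destruct (Nat.eqb_spec y 0) as [->|Hy0].
  - destruct (Nat.ltb_spec 0 N); [|lia]. destruct (Nat.eqb_spec 0 N); [lia|].
    rewrite Nat.sub_0_r, pow_O, pow_1, HqN.
    pose proof (robin_boundary_ineq A (q ^ (N - 1)) A_le ltac:(lra)).
    rewrite Hae in *. nra.
  - destruct (Nat.eqb_spec y N) as [->|HyN].
    + destruct (Nat.ltb_spec N N); [lia|]. rewrite Nat.sub_diag.
      replace (N - pred N)%nat with 1%nat by lia. replace (pred N) with (N - 1)%nat by lia.
      rewrite pow_O, pow_1, HqN.
      pose proof (robin_boundary_ineq B (q ^ (N - 1)) B_le ltac:(lra)).
      rewrite Hae in *. nra.
    + destruct (Nat.ltb_spec y N); [|lia].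
      destruct y as [|j]; [lia|]. simpl pred.
      set (k := (N - S (S j))%nat).
      replace (N - S j)%nat with (S k) by (unfold k; lia).
      replace (N - j)%nat with (S (S k)) by (unfold k; lia).
      cbn [pow]. set (r := q ^ j). set (s := q ^ k).
      assert (0 <= r) by (apply pow_le; lra). assert (0 <= s) by (apply pow_le; lra).
      replace (-2 * (q * r + q * s) + (q * (q * r) + s) + (r + q * (q * s)) + 0 + 0)
        with ((r + s) * (a * eps N) ^ 2) by (rewrite Hae; ring).
      assert (0 <= (r + s) * (a * eps N) ^ 2) by (apply Rmult_le_pos; [lra|apply pow2_ge_0]).
      nra.
Qed.

Lemma robin_weight_bounds z : (z <= N)%nat -> q ^ N <= robin_weight N q z <= 2.
Proof.
  intros Hz. pose proof ratio_bounds. unfold robin_weight.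
  pose proof (pow_le_pow_of_le q z N ltac:(lra) Hz).
  assert (0 <= q ^ (N - z)) by (apply pow_le; lra).
  assert (q ^ z <= 1) by (rewrite <- (pow1 z); apply pow_incr; lra).
  assert (q ^ (N - z) <= 1) by (rewrite <- (pow1 (N - z)); apply pow_incr; lra).
  lra.
Qed.

Lemma weighted_mass_le x t : (x <= N)%nat -> 0 <= t ->
  rsum (fun z => pR A B N t x z * robin_weight N q z) (S N) <= 2 * exp ((a * eps N) ^ 2 * t).
Proof.
  intros Hx Ht. pose proof ratio_bounds.
  set (lam := (a * eps N) ^ 2). set (w := fun s z => pR A B N s x z).
  set (mass := fun r => rsum (fun z => w r z * robin_weight N q z) (S N)).
  change (mass t <= 2 * exp (lam * t)).
  assert (HF : exp (- lam * t) * mass t <= exp (- lam * 0) * mass 0).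
  { apply (derive_nonpos_antitone (fun r => exp (- lam * r) * mass r)
      (fun r => (- lam * exp (- lam * r)) * mass r
                + exp (- lam * r) * (/ 2 * rsum (fun u => w r u * vecmat N (Delta A B N)
                                                  (robin_weight N q) u) (S N))) 0 t Ht).
    - intros r _. apply (is_derive_Rmult (fun r => exp (- lam * r)) mass);
        [apply is_derive_exp_linear|].
      apply weighted_sum_derive; [apply pR_heat_flow|apply Delta_symmetric].
    - intros r Hr. pose proof (exp_pos (- lam * r)).
      assert (Hsup : rsum (fun u => w r u * vecmat N (Delta A B N) (robin_weight N q) u) (S N)
                     <= rsum (fun u => 2 * lam * (w r u * robin_weight N q u)) (S N)).
      { apply rsum_le. intros u Hu. pose proof (pR_nonneg A B N r x u ltac:(lia) ltac:(lia) ltac:(lra)).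
        pose proof (robin_weight_supersolution u ltac:(lia)) as Hphi. fold lam in Hphi.
        unfold w. nra. }
      rewrite rsum_scal in Hsup. fold (mass r) in Hsup.
      assert (exp (- lam * r) * (/ 2 * rsum (fun u => w r u * vecmat N (Delta A B N)
                                             (robin_weight N q) u) (S N))
              <= exp (- lam * r) * (lam * mass r)) by (apply Rmult_le_compat_l; lra).
      lra. }
  unfold mass at 2, w in HF. rewrite weighted_sum_pR_0, Rmult_0_r, exp_0, Rmult_1_l in HF by auto.
  pose proof (exp_pos (lam * t)). pose proof (robin_weight_bounds x Hx).
  apply Rmult_le_compat_l with (r := exp (lam * t)) in HF; [|lra].
  rewrite <- Rmult_assoc, <- exp_plus in HF.
  replace (lam * t + - lam * t) with 0 in HF by ring. rewrite exp_0 in HF. nra.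
Qed.

Lemma l1norm_pR_le T x t : (x <= N)%nat -> 0 <= t -> eps N ^ 2 * t <= T ->
  l1norm N (fun z => pR A B N t x z) <= 2 * exp (a ^ 2 * T) / exp (- 2 * a).
Proof.
  intros Hx Ht HT. pose proof ratio_bounds.
  assert (Hwn : forall z, (z <= N)%nat -> 0 <= pR A B N t x z)
    by (intros; apply pR_nonneg; auto; lia).
  assert (HqN : 0 < q ^ N) by (apply pow_lt; lra).
  assert (Hlt : exp ((a * eps N) ^ 2 * t) <= exp (a ^ 2 * T)).
  { apply exp_le. replace ((a * eps N) ^ 2 * t) with (a ^ 2 * (eps N ^ 2 * t)) by ring.
    apply Rmult_le_compat_l; [apply pow2_ge_0|auto]. }
  assert (HL : l1norm N (fun z => pR A B N t x z)
               <= rsum (fun z => pR A B N t x z * robin_weight N q z) (S N) / q ^ N).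
  { unfold l1norm, Rdiv. rewrite Rmult_comm, <- rsum_scal. apply rsum_le. intros z Hz.
    rewrite Rabs_right by (apply Rle_ge, Hwn; lia).
    pose proof (Hwn z ltac:(lia)). pose proof (robin_weight_bounds z ltac:(lia)).
    apply Rmult_le_reg_l with (q ^ N); auto. rewrite <- Rmult_assoc, Rinv_r, Rmult_1_l by lra.
    nra. }
  pose proof (weighted_mass_le x t Hx Ht).
  eapply Rle_trans; [apply HL|]. unfold Rdiv. apply Rmult_le_compat.
  - apply rsum_nonneg. intros z Hz. pose proof (robin_weight_bounds z ltac:(lia)).
    apply Rmult_le_pos; [apply Hwn; lia|lra].
  - left; apply Rinv_0_lt_compat; auto.
  - lra.
  - apply Rinv_le_contravar; [apply exp_pos|apply exp_le_ratio_pow].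
Qed.
End RobinWeight.

(** * Decay of a coercive symmetric flow with bounded mass *)

Lemma le_sqrt_of_sq X Y : 0 <= X -> X ^ 2 <= Y -> X <= sqrt Y.
Proof. intros HX H. rewrite <- (Rabs_right X) by lra. apply abs_le_sqrt; auto. Qed.

Lemma pow_sqrt_le_half r k : 0 <= r ->
  r ^ k * sqrt r <= 2 * 2 ^ k * ((r / 2) ^ k * sqrt (r / 2)).
Proof.
  intros Hr.
  assert (Hs : sqrt r <= 2 * sqrt (r / 2)).
  { enough (sqrt r / 2 <= sqrt (r / 2)) by lra.
    apply le_sqrt_of_sq; [pose proof (sqrt_pos r); lra|].
    replace ((sqrt r / 2) ^ 2) with (sqrt r * sqrt r / 4) by field.
    rewrite sqrt_sqrt by auto. lra. }
  replace (2 * 2 ^ k * ((r / 2) ^ k * sqrt (r / 2))) with (r ^ k * (2 * sqrt (r / 2))).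
  - apply Rmult_le_compat_l; auto. apply pow_le; auto.
  - unfold Rdiv. rewrite Rpow_mult_distr, pow_inv.
    assert (0 < 2 ^ k) by (apply pow_lt; lra). field. lra.
Qed.

Lemma window_choice N T r : 0 < T -> 1 <= r -> r <= INR N ^ 2 * T ->
  exists m : nat, (1 <= m)%nat /\ (m <= S N)%nat /\
    INR m <= 2 * sqrt r /\ sqrt r <= (1 + sqrt T) * INR m.
Proof.
  intros HT Hr1 Hr2.
  assert (Hs1 : 1 <= sqrt r) by (rewrite <- sqrt_1; apply sqrt_le_1_alt; auto).
  destruct (ceil_nat (sqrt r)) as [k [Hk1 Hk2]]; [apply sqrt_pos|].
  pose proof (sqrt_pos T).
  destruct (le_lt_dec k (S N)) as [Hk|Hk].
  - exists k. assert (1 <= k)%nat by (destruct k; [simpl in Hk1; lra|lia]).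
    assert (0 <= sqrt T * INR k) by (apply Rmult_le_pos; [auto|apply pos_INR]).
    repeat split; auto; lra.
  - exists (S N). assert (INR (S N) < INR k) by (apply lt_INR; auto).
    assert (sqrt r <= INR N * sqrt T).
    { rewrite <- (sqrt_pow2 (INR N)) by apply pos_INR.
      rewrite <- sqrt_mult by (try apply pow2_ge_0; lra). apply sqrt_le_1_alt; auto. }
    rewrite S_INR in *. pose proof (pos_INR N). repeat split; try lia; nra.
Qed.

Lemma sq_le_of_decay N T u y r k a b : 0 < T -> 1 <= r -> r <= INR N ^ 2 * T ->
  (y <= N)%nat -> energy N u * (r ^ k * sqrt r) <= a ->
  dirichlet N u * (r ^ S k * sqrt r) <= b ->
  u y ^ 2 * r ^ S k <= 2 * (1 + sqrt T) * a + 4 * b.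
Proof.
  intros HT Hr1 Hr2 Hy HE HD.
  destruct (window_choice N T r HT Hr1 Hr2) as [m [Hm1 [Hm2 [Hm3 Hm4]]]].
  pose proof (sq_le_window N u y m Hy Hm1 Hm2) as Hw.
  assert (Hsr : 0 < sqrt r) by (apply sqrt_lt_R0; lra).
  assert (Hm : 0 < INR m) by (apply lt_0_INR; lia).
  assert (Hrr : sqrt r * sqrt r = r) by (apply sqrt_sqrt; lra).
  assert (Hrk : 0 < r ^ k) by (apply pow_lt; lra).
  pose proof (energy_nonneg N u). pose proof (dirichlet_nonneg N u). pose proof (sqrt_pos T).
  set (X := r ^ k * sqrt r) in *. assert (HX : 0 < X) by (unfold X; nra).
  assert (HrS : r ^ S k = X * sqrt r) by (unfold X; rewrite Rmult_assoc, Hrr; simpl; ring).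
  rewrite HrS in *.
  assert (HE1 : energy N u * X * sqrt r <= a * (1 + sqrt T) * INR m).
  { assert (energy N u * X * sqrt r <= energy N u * X * ((1 + sqrt T) * INR m))
      by (apply Rmult_le_compat_l; nra).
    assert (0 <= energy N u * X) by nra. nra. }
  assert (HD1 : INR m * (dirichlet N u * X * sqrt r) <= 2 * b).
  { assert (0 <= dirichlet N u * X * sqrt r) by (apply Rmult_le_pos; [apply Rmult_le_pos|]; lra).
    assert (dirichlet N u * X * sqrt r * INR m <= dirichlet N u * X * sqrt r * (2 * sqrt r))
      by (apply Rmult_le_compat_l; lra).
    replace (dirichlet N u * (X * sqrt r * sqrt r)) with (dirichlet N u * X * sqrt r * sqrt r)
      in HD by ring.
    lra. }
  assert (Hw' : INR m * u y ^ 2 * (X * sqrt r)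
                <= (2 * energy N u + 2 * INR m ^ 2 * dirichlet N u) * (X * sqrt r))
    by (apply Rmult_le_compat_r; nra).
  apply Rmult_le_reg_l with (INR m); auto. nra.
Qed.

Definition energy_decay_const (c T L0 : R) : R :=
  let k := nash_rate L0 (exp (c * T)) in sqrt (exp (2 * ((8 * k * L0 ^ 4 + c) * T)) / k).

Definition row_decay_const (c T L0 : R) : R :=
  sqrt ((2 * (1 + sqrt T) + 4 * (8 + 2 * c * T)) * energy_decay_const c T L0).

Definition derivative_decay_const (c T L0 : R) : R :=
  / 2 * sqrt ((2 * (1 + sqrt T) + 4 * (32 + 2 * c * T))
              * (2 * exp (c * T) * (16 + c * T) * energy_decay_const c T L0)).

Section FlowDecay.
Variables (N : nat) (M : nat -> nat -> R) (c T : R).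
Hypotheses (N_pos : (1 <= N)%nat) (T_pos : 0 < T) (c_pos : 0 < c).
Hypothesis M_sym : symmetric_on N M.
Hypothesis M_coercive :
  forall u, / 2 * dirichlet N u - c * eps N ^ 2 * energy N u <= - quadform N M u.

Let horizon := INR N ^ 2 * T.

Lemma eps_sq_time_le r : 0 <= r <= horizon -> eps N ^ 2 * r <= T.
Proof.
  intros Hr. assert (HN : 0 < INR N) by (apply lt_0_INR; lia).
  unfold eps. rewrite pow_inv. apply Rmult_le_reg_l with (INR N ^ 2); [apply pow_lt; auto|].
  rewrite <- Rmult_assoc, Rinv_r, Rmult_1_l by (apply pow_nonzero; lra). unfold horizon in Hr. lra.
Qed.

Lemma quadform_le_energy u : quadform N M u <= c * eps N ^ 2 * energy N u.
Proof. pose proof (M_coercive u). pose proof (dirichlet_nonneg N u). lra. Qed.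

Lemma eps_energy_decay u k a r : 0 < r <= horizon ->
  energy N (u r) * (r ^ k * sqrt r) <= a ->
  c * eps N ^ 2 * energy N (u r) * (r ^ S k * sqrt r) <= c * T * a.
Proof.
  intros Hr HE. pose proof (eps_sq_time_le r ltac:(lra)). pose proof (energy_nonneg N (u r)).
  assert (0 < r ^ k) by (apply pow_lt; lra). pose proof (sqrt_pos r).
  assert (0 <= eps N ^ 2 * r) by (pose proof (pow2_ge_0 (eps N)); nra).
  replace (c * eps N ^ 2 * energy N (u r) * (r ^ S k * sqrt r))
    with (c * ((eps N ^ 2 * r) * (energy N (u r) * (r ^ k * sqrt r)))) by (simpl; ring).
  assert (0 <= energy N (u r) * (r ^ k * sqrt r)) by (apply Rmult_le_pos; [|apply Rmult_le_pos]; lra).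
  rewrite (Rmult_assoc c T a). apply Rmult_le_compat_l; [lra|]. apply Rmult_le_compat; lra.
Qed.

Lemma quadform_decay u k a r : 0 < r <= horizon ->
  energy N (u r) * (r ^ k * sqrt r) <= a ->
  quadform N M (u r) * (r ^ S k * sqrt r) <= c * T * a.
Proof.
  intros Hr HE. pose proof (eps_energy_decay u k a r Hr HE).
  assert (0 < r ^ S k) by (apply pow_lt; lra). pose proof (sqrt_pos r).
  assert (quadform N M (u r) * (r ^ S k * sqrt r)
          <= c * eps N ^ 2 * energy N (u r) * (r ^ S k * sqrt r))
    by (apply Rmult_le_compat_r; [nra|apply quadform_le_energy]).
  lra.
Qed.

Section DecayOfFlow.
Variable u : R -> nat -> R.
Hypothesis u_flow : heat_flow N M u.
Variables (k : nat) (a : R).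
Hypothesis u_decay : forall r, 0 < r <= horizon -> energy N (u r) * (r ^ k * sqrt r) <= a.

Lemma neg_quadform_decay r : 0 < r <= horizon ->
  - quadform N M (u r) * (r ^ S k * sqrt r) <= 4 * 2 ^ k * a.
Proof.
  intros Hr. pose proof (dissipation_bound N M u u_flow M_sym (r / 2) r ltac:(lra)) as Hd.
  replace (r - r / 2) with (r / 2) in Hd by field.
  pose proof (u_decay (r / 2) ltac:(unfold horizon in *; lra)) as H2.
  pose proof (energy_nonneg N (u r)). pose proof (energy_nonneg N (u (r / 2))).
  pose proof (pow_sqrt_le_half r k ltac:(lra)).
  assert (0 < r ^ k) by (apply pow_lt; lra). pose proof (sqrt_pos r).
  assert (0 < (r / 2) ^ k) by (apply pow_lt; lra). pose proof (sqrt_pos (r / 2)).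
  assert (0 < 2 ^ k) by (apply pow_lt; lra).
  set (X := r ^ k * sqrt r) in *. set (Y := (r / 2) ^ k * sqrt (r / 2)) in *.
  assert (0 <= X) by (unfold X; nra). assert (0 <= Y) by (unfold Y; nra).
  assert (Ha : 0 <= a) by nra.
  replace (r ^ S k * sqrt r) with (2 * X * (r / 2)) by (unfold X; simpl; field).
  destruct (Rle_lt_dec (- quadform N M (u r)) 0) as [Hneg|Hpos].
  - assert (0 <= 2 * X * (r / 2)) by nra. nra.
  - assert (- quadform N M (u r) * (r / 2) * (2 * X) <= energy N (u (r / 2)) * (2 * X))
      by (apply Rmult_le_compat_r; lra).
    assert (energy N (u (r / 2)) * (2 * X) <= energy N (u (r / 2)) * (2 * (2 * 2 ^ k * Y)))
      by (apply Rmult_le_compat_l; lra).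
    nra.
Qed.

Lemma dirichlet_decay r : 0 < r <= horizon ->
  dirichlet N (u r) * (r ^ S k * sqrt r) <= (8 * 2 ^ k + 2 * c * T) * a.
Proof.
  intros Hr. pose proof (neg_quadform_decay r Hr).
  pose proof (eps_energy_decay u k a r Hr (u_decay r Hr)). pose proof (M_coercive (u r)).
  assert (0 < r ^ S k) by (apply pow_lt; lra). pose proof (sqrt_pos r).
  assert (dirichlet N (u r) * (r ^ S k * sqrt r)
          <= 2 * (- quadform N M (u r) + c * eps N ^ 2 * energy N (u r)) * (r ^ S k * sqrt r))
    by (apply Rmult_le_compat_r; [nra|lra]).
  nra.
Qed.

Lemma vecmat_energy_decay r : 0 < r <= horizon ->
  energy N (fun y => vecmat N M (u r) y) * (r ^ S (S k) * sqrt r)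
  <= 2 * exp (c * T) * (16 * 4 ^ k + c * T) * a.
Proof.
  intros Hr. assert (Hce : 0 <= c * eps N ^ 2) by (pose proof (pow2_ge_0 (eps N)); nra).
  pose proof (vecmat_energy_bound N M u (c * eps N ^ 2) (r / 2) r u_flow M_sym
                quadform_le_energy Hce ltac:(lra)) as HV.
  replace (r - r / 2) with (r / 2) in HV by field.
  pose proof (quadform_decay u k a r Hr (u_decay r Hr)) as Hq1.
  pose proof (neg_quadform_decay (r / 2) ltac:(unfold horizon in *; lra)) as Hq2.
  pose proof (pow_sqrt_le_half r (S k) ltac:(lra)) as Hh.
  pose proof (energy_nonneg N (fun y => vecmat N M (u r) y)) as HEv.
  pose proof (energy_nonneg N (u r)). pose proof (u_decay r Hr).
  assert (0 < r ^ k) by (apply pow_lt; lra). pose proof (sqrt_pos r).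
  assert (0 < (r / 2) ^ S k) by (apply pow_lt; lra). pose proof (sqrt_pos (r / 2)).
  assert (0 < 2 ^ k) by (apply pow_lt; lra).
  assert (H4k : 2 ^ k * 2 ^ k = 4 ^ k)
    by (rewrite <- Rpow_mult_distr; f_equal; ring).
  assert (Ha : 0 <= a).
  { enough (0 <= energy N (u r) * (r ^ k * sqrt r)) by lra.
    apply Rmult_le_pos; [|apply Rmult_le_pos]; lra. }
  set (Z := r ^ S k * sqrt r) in *. set (Z2 := (r / 2) ^ S k * sqrt (r / 2)) in *.
  assert (HZ : 0 <= Z) by (unfold Z; apply Rmult_le_pos; [apply pow_le|]; lra).
  assert (0 <= Z2) by (unfold Z2; apply Rmult_le_pos; lra).
  set (X := quadform N M (u r) - quadform N M (u (r / 2))) in *.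
  assert (Hex : exp (c * eps N ^ 2 * (r / 2)) <= exp (c * T)).
  { apply exp_le. pose proof (eps_sq_time_le r ltac:(lra)). pose proof (pow2_ge_0 (eps N)). nra. }
  pose proof (exp_pos (c * eps N ^ 2 * (r / 2))).
  assert (HX : 0 <= X) by nra.
  assert (Hneg : - quadform N M (u (r / 2)) * Z <= 16 * 4 ^ k * a).
  { destruct (Rle_lt_dec (- quadform N M (u (r / 2))) 0); [nra|].
    assert (- quadform N M (u (r / 2)) * Z <= - quadform N M (u (r / 2)) * (2 * 2 ^ S k * Z2))
      by (apply Rmult_le_compat_l; lra).
    simpl in *. nra. }
  assert (HXZ : X * Z <= (16 * 4 ^ k + c * T) * a) by (unfold X; nra).
  replace (r ^ S (S k) * sqrt r) with (2 * Z * (r / 2)) by (unfold Z; simpl; field).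
  assert (energy N (fun y => vecmat N M (u r) y) * (r / 2) * (2 * Z)
          <= exp (c * eps N ^ 2 * (r / 2)) * X * (2 * Z)) by (apply Rmult_le_compat_r; lra).
  assert (exp (c * eps N ^ 2 * (r / 2)) * (X * Z) <= exp (c * T) * (X * Z))
    by (apply Rmult_le_compat_r; nra).
  nra.
Qed.

End DecayOfFlow.
Section NashDecay.
Variables (w : R -> nat -> R) (L0 : R).
Hypothesis w_flow : heat_flow N M w.
Hypothesis w_energy0 : energy N (w 0) = 1.
Hypothesis L0_pos : 0 < L0.
Hypothesis w_l1 : forall r, 0 <= r <= horizon -> l1norm N (w r) <= L0.

Lemma energy_le_exp r : 0 <= r <= horizon -> energy N (w r) <= exp (c * T).
Proof.
  intros Hr.
  pose proof (energy_gronwall N M w w_flow (c * eps N ^ 2) 0 r quadform_le_energy ltac:(lra)) as HG.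
  rewrite w_energy0, Rmult_1_r, Rminus_0_r in HG.
  eapply Rle_trans; [apply HG|]. apply exp_le. rewrite Rmult_assoc.
  apply Rmult_le_compat_l; [lra|]. apply eps_sq_time_le; lra.
Qed.

(** Nash's argument: along the flow [E' = quadform <= - D / 2 + O(eps^2) E] and
    the Nash inequality bounds [D] below by [E^3], so [E] decays like
    [r^(-1/2)]. *)
Lemma energy_decay r : 0 < r <= horizon ->
  energy N (w r) * (r ^ 0 * sqrt r) <= energy_decay_const c T L0.
Proof.
  intros Hr. unfold energy_decay_const. set (k := nash_rate L0 (exp (c * T))). assert (Hk : 0 < k) by (apply nash_rate_pos; auto; apply exp_pos).
  assert (HkL : 0 <= 8 * k * L0 ^ 4 + c) by (pose proof (pow_le L0 4 ltac:(lra)); nra).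
  set (rho := (8 * k * L0 ^ 4 + c) * eps N ^ 2).
  assert (Hrho : 0 <= rho) by (apply Rmult_le_pos; [lra|apply pow2_ge_0]).
  assert (HO : energy N (w r) ^ 2 * r <= exp (2 * rho * r) / (2 * (k / 2))).
  { apply (cubic_decay_ode (fun r => energy N (w r)) (fun r => quadform N M (w r))); auto; try lra.
    - intros; apply energy_derive; auto.
    - intros; apply energy_nonneg.
    - intros r' Hr'. pose proof (M_coercive (w r')).
      pose proof (nash_inequality N (w r') L0 (exp (c * T)) N_pos L0_pos (exp_pos _)
                    (w_l1 r' ltac:(lra)) (energy_le_exp r' ltac:(lra))) as Hn.
      fold k in Hn. unfold rho. nra. }
  replace (2 * (k / 2)) with k in HO by field.
  simpl pow. rewrite Rmult_1_l. apply le_sqrt_of_sq.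
  - apply Rmult_le_pos; [apply energy_nonneg|apply sqrt_pos].
  - replace ((energy N (w r) * sqrt r) ^ 2) with (energy N (w r) ^ 2 * (sqrt r * sqrt r)) by ring.
    rewrite sqrt_sqrt by lra. eapply Rle_trans; [apply HO|].
    unfold Rdiv. apply Rmult_le_compat_r; [left; apply Rinv_0_lt_compat; auto|].
    apply exp_le. unfold rho.
    pose proof (eps_sq_time_le r ltac:(lra)).
    replace (2 * ((8 * k * L0 ^ 4 + c) * eps N ^ 2) * r)
      with (2 * ((8 * k * L0 ^ 4 + c) * (eps N ^ 2 * r))) by ring.
    apply Rmult_le_compat_l; [lra|]. apply Rmult_le_compat_l; lra.
Qed.

Lemma row_bounded y r : (y <= N)%nat -> 0 <= r <= horizon -> Rabs (w r y) <= sqrt (exp (c * T)).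
Proof.
  intros Hy Hr. apply abs_le_sqrt. eapply Rle_trans; [apply (sq_le_energy N); auto|].
  apply energy_le_exp; auto.
Qed.

Lemma row_decay y r : (y <= N)%nat -> 1 <= r <= horizon ->
  Rabs (w r y) * sqrt r <= row_decay_const c T L0.
Proof.
  intros Hy Hr. unfold row_decay_const.
  pose proof (sq_le_of_decay N T (w r) y r 0 _ _ T_pos ltac:(lra) ltac:(unfold horizon in *; lra) Hy
                (energy_decay r ltac:(lra))
                (dirichlet_decay w w_flow 0 _ (fun r Hr => energy_decay r Hr) r ltac:(lra))) as Hsq.
  apply le_sqrt_of_sq; [apply Rmult_le_pos; [apply Rabs_pos|apply sqrt_pos]|].
  replace ((Rabs (w r y) * sqrt r) ^ 2) with (w r y ^ 2 * (sqrt r * sqrt r))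
    by (rewrite <- (pow2_abs (w r y)); ring).
  rewrite sqrt_sqrt by lra. simpl pow in *. lra.
Qed.

Lemma row_derivative_decay y r : (y <= N)%nat -> 1 <= r <= horizon ->
  Rabs (/ 2 * vecmat N M (w r) y) * (r * sqrt r) <= derivative_decay_const c T L0.
Proof.
  intros Hy Hr. unfold derivative_decay_const.
  set (v := fun r y => vecmat N M (w r) y).
  pose proof (vecmat_energy_decay w w_flow 0 _ (fun r Hr => energy_decay r Hr)) as HEv.
  pose proof (sq_le_of_decay N T (v r) y r 2 _ _ T_pos ltac:(lra) ltac:(unfold horizon in *; lra) Hy
                (HEv r ltac:(lra))
                (dirichlet_decay v (heat_flow_vecmat N M w w_flow) 2 _ HEv r ltac:(lra))) as Hsq.
  rewrite Rabs_mult, Rabs_right by lra. rewrite Rmult_assoc.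
  apply Rmult_le_compat_l; [lra|].
  apply le_sqrt_of_sq; [apply Rmult_le_pos; [apply Rabs_pos|pose proof (sqrt_pos r); nra]|].
  replace ((Rabs (vecmat N M (w r) y) * (r * sqrt r)) ^ 2)
    with (vecmat N M (w r) y ^ 2 * (r * r * (sqrt r * sqrt r)))
    by (rewrite <- (pow2_abs (vecmat N M (w r) y)); ring).
  rewrite sqrt_sqrt by lra. unfold v in Hsq. simpl pow in *. lra.
Qed.

End NashDecay.

End FlowDecay.

(** * Hölder continuity in time *)

Lemma ln_le_of_le x y : 0 < x -> x <= y -> ln x <= ln y.
Proof. intros Hx H. destruct (Req_dec x y); [subst; lra|]. left; apply ln_increasing; lra. Qed.

Lemma Rpower_ge_1 x v : 1 <= x -> 0 <= v -> 1 <= Rpower x v.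
Proof.
  intros Hx Hv. unfold Rpower. rewrite <- exp_0. apply exp_le.
  pose proof (ln_le_of_le 1 x ltac:(lra) Hx) as Hln. rewrite ln_1 in Hln. nra.
Qed.

Lemma Rpower_ge_base x v : 0 < x < 1 -> v <= 1 -> x <= Rpower x v.
Proof.
  intros Hx Hv. unfold Rpower. rewrite <- (exp_ln x) at 1 by lra. apply exp_le.
  assert (ln x < 0) by (rewrite <- ln_1; apply ln_increasing; lra). nra.
Qed.

Lemma Rpower_lt_1_neg s v : 0 < s < 1 -> 0 <= v -> 1 <= Rpower s (- (1 / 2) - v).
Proof.
  intros Hs Hv. unfold Rpower. apply Rle_trans with (exp 0); [rewrite exp_0; lra|]. apply exp_le.
  assert (ln s < 0) by (rewrite <- ln_1; apply ln_increasing; lra).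
  replace ((- (1 / 2) - v) * ln s) with ((1 / 2 + v) * (- ln s)) by ring.
  apply Rmult_le_pos; lra.
Qed.

Lemma Rpower_ge_1_neg s v : 1 <= s -> 0 <= v -> Rpower s (- (1 / 2) - v) <= 1.
Proof.
  intros Hs Hv. unfold Rpower. apply Rle_trans with (exp 0); [|rewrite exp_0; lra]. apply exp_le.
  pose proof (ln_le_of_le 1 s ltac:(lra) Hs) as Hln. rewrite ln_1 in Hln.
  replace ((- (1 / 2) - v) * ln s) with (- ((1 / 2 + v) * ln s)) by ring.
  assert (0 <= (1 / 2 + v) * ln s) by (apply Rmult_le_pos; lra). lra.
Qed.

Lemma minfac_small s v : 0 <= s < 1 -> 0 <= v -> minfac s v = 1.
Proof.
  intros Hs Hv. unfold minfac. destruct (Req_EM_T s 0); auto.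
  apply Rmin_left, Rpower_lt_1_neg; lra.
Qed.

Lemma minfac_large s v : 1 <= s -> 0 <= v -> minfac s v = Rpower s (- (1 / 2) - v).
Proof.
  intros Hs Hv. unfold minfac. destruct (Req_EM_T s 0); [lra|].
  apply Rmin_right, Rpower_ge_1_neg; lra.
Qed.

Lemma inv_sqrt_le_Rpower s u v : 1 <= s -> s <= u -> 0 <= v ->
  / sqrt s <= Rpower s (- (1 / 2) - v) * Rpower u v.
Proof.
  intros Hs Hu Hv. rewrite <- Rpower_sqrt, <- Rpower_Ropp by lra.
  unfold Rpower. rewrite <- exp_plus. apply exp_le.
  pose proof (ln_le_of_le s u ltac:(lra) Hu). nra.
Qed.

Lemma ratio_le_Rpower s u v : 1 <= s -> 0 < u < s -> 0 <= v <= 1 ->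
  u / (s * sqrt s) <= Rpower s (- (1 / 2) - v) * Rpower u v.
Proof.
  intros Hs Hu Hv. rewrite <- Rpower_sqrt by lra.
  replace (u / (s * Rpower s (/ 2))) with (exp (ln u + - (ln s + / 2 * ln s))).
  2:{ unfold Rpower. rewrite exp_plus, exp_Ropp, exp_plus, !exp_ln by lra. field.
      split; [apply Rgt_not_eq, exp_pos|lra]. }
  unfold Rpower. rewrite <- exp_plus. apply exp_le.
  pose proof (ln_le_of_le u s ltac:(lra) ltac:(lra)). nra.
Qed.

(** For [s < 1] the increment is bounded by the mean value theorem when
    [t - s < 1] and by the triangle inequality otherwise. *)
Lemma increment_bound_early X C0 C1 s t v : 0 <= C0 -> 0 <= C1 -> s < 1 -> s < t -> v <= 1 ->
  0 <= v -> X <= 2 * C0 -> X <= C1 * (t - s) -> X <= (2 * C0 + C1) * Rpower (t - s) v.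
Proof.
  intros HC0 HC1 Hs Hst Hv1 Hv0 Htri Hmvt.
  destruct (Rlt_le_dec (t - s) 1) as [Hu|Hu].
  - assert (t - s <= Rpower (t - s) v) by (apply Rpower_ge_base; lra).
    assert (C1 * (t - s) <= C1 * Rpower (t - s) v) by (apply Rmult_le_compat_l; lra).
    assert (0 <= 2 * C0 * Rpower (t - s) v) by (unfold Rpower; pose proof (exp_pos (v * ln (t - s))); nra).
    lra.
  - assert (1 <= Rpower (t - s) v) by (apply Rpower_ge_1; lra). nra.
Qed.

(** For [s >= 1] the same dichotomy is made at [t - s = s], using the decay
    of [p] and of its derivative [d]. *)
Lemma increment_bound_late X CP CD s t v : 0 <= CP -> 0 <= CD -> 1 <= s -> s < t -> 0 <= v <= 1 ->
  X <= 2 * CP / sqrt s -> X <= CD * ((t - s) / (s * sqrt s)) ->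
  X <= (2 * CP + CD) * Rpower s (- (1 / 2) - v) * Rpower (t - s) v.
Proof.
  intros HCP HCD Hs Hst Hv Htri Hmvt.
  set (P := Rpower s (- (1 / 2) - v)). set (R := Rpower (t - s) v).
  assert (0 < P * R) by (unfold P, R, Rpower; apply Rmult_lt_0_compat; apply exp_pos).
  destruct (Rlt_le_dec (t - s) s) as [Hu|Hu].
  - pose proof (ratio_le_Rpower s (t - s) v Hs ltac:(lra) Hv) as Hrat. fold P R in Hrat.
    assert (CD * ((t - s) / (s * sqrt s)) <= CD * (P * R)) by (apply Rmult_le_compat_l; lra).
    nra.
  - pose proof (inv_sqrt_le_Rpower s (t - s) v Hs Hu ltac:(lra)) as Hinv. fold P R in Hinv.
    assert (2 * CP / sqrt s <= 2 * CP * (P * R))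
      by (unfold Rdiv; apply Rmult_le_compat_l; lra).
    nra.
Qed.

Lemma increment_bound (p d : R -> R) h C0 C1 CP CD s t v :
  (forall r, is_derive p r (d r)) ->
  (forall r, 0 <= r <= h -> Rabs (p r) <= C0) ->
  (forall r, 0 <= r <= h -> Rabs (d r) <= C1) ->
  (forall r, 1 <= r <= h -> Rabs (p r) * sqrt r <= CP) ->
  (forall r, 1 <= r <= h -> Rabs (d r) * (r * sqrt r) <= CD) ->
  0 <= CP -> 0 <= CD -> 0 <= s -> s < t -> t <= h -> 0 <= v <= 1 ->
  Rabs (p t - p s) <= (2 * C0 + C1 + 2 * CP + CD) * minfac s v * Rpower (t - s) v.
Proof.
  intros Hd HC0 HC1 HCP HCD HP0 HD0 Hs Hst Ht Hv.
  destruct (MVT_is_derive p d s t Hst) as [xi [Hxi Hmvt]]; [intros; apply Hd|].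
  assert (Htri : Rabs (p t - p s) <= Rabs (p t) + Rabs (p s)).
  { unfold Rminus. rewrite <- (Rabs_Ropp (p s)). apply Rabs_triang. }
  assert (Hmv : Rabs (p t - p s) = Rabs (d xi) * (t - s))
    by (rewrite Hmvt, Rabs_mult, (Rabs_right (t - s)); lra).
  assert (HR : 0 < Rpower (t - s) v) by (unfold Rpower; apply exp_pos).
  pose proof (HC0 s ltac:(lra)). pose proof (Rabs_pos (p s)).
  destruct (Rlt_le_dec s 1) as [Hs1|Hs1].
  - rewrite minfac_small, Rmult_1_r by lra.
    pose proof (HC0 t ltac:(lra)). pose proof (HC1 xi ltac:(lra)). pose proof (Rabs_pos (d xi)).
    assert (Rabs (p t - p s) <= (2 * C0 + C1) * Rpower (t - s) v).
    { apply increment_bound_early; try lra. rewrite Hmv. apply Rmult_le_compat_r; lra. }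
    assert ((2 * C0 + C1) * Rpower (t - s) v <= (2 * C0 + C1 + 2 * CP + CD) * Rpower (t - s) v)
      by (apply Rmult_le_compat_r; lra).
    lra.
  - rewrite minfac_large by lra.
    assert (Hsq : 1 <= sqrt s) by (rewrite <- sqrt_1; apply sqrt_le_1_alt; lra).
    assert (Hdecay : forall r, s <= r <= h -> Rabs (p r) <= CP / sqrt s).
    { intros r Hr. apply Rmult_le_reg_r with (sqrt s); [lra|]. unfold Rdiv.
      rewrite Rmult_assoc, Rinv_l, Rmult_1_r by lra. eapply Rle_trans; [|apply (HCP r); lra].
      apply Rmult_le_compat_l; [apply Rabs_pos|apply sqrt_le_1_alt; lra]. }
    assert (Hdd : Rabs (d xi) * (s * sqrt s) <= CD).
    { eapply Rle_trans; [|apply (HCD xi); lra]. apply Rmult_le_compat_l; [apply Rabs_pos|].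
      apply Rmult_le_compat; try lra. apply sqrt_le_1_alt; lra. }
    assert (Rabs (p t - p s) <= (2 * CP + CD) * Rpower s (- (1 / 2) - v) * Rpower (t - s) v).
    { apply increment_bound_late; auto.
      - pose proof (Hdecay s ltac:(lra)). pose proof (Hdecay t ltac:(lra)). unfold Rdiv in *. lra.
      - rewrite Hmv. replace (Rabs (d xi) * (t - s))
          with (Rabs (d xi) * (s * sqrt s) * ((t - s) / (s * sqrt s))) by (field; nra).
        apply Rmult_le_compat_r; [apply Rdiv_le_0_compat; nra|lra]. }
    assert (0 <= Rpower s (- (1 / 2) - v) * Rpower (t - s) v)
      by (unfold Rpower at 1; pose proof (exp_pos ((- (1 / 2) - v) * ln s)); nra).
    assert (0 <= 2 * C0 + C1) by (pose proof (HC1 s ltac:(lra)); pose proof (Rabs_pos (d s)); lra).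
    nra.
Qed.
Lemma robin_coef_abs_le a N : (1 <= N)%nat -> Rabs (1 - a * eps N) <= 1 + Rabs a.
Proof.
  intros HN. pose proof (eps_pos N HN). pose proof (eps_le_1 N HN).
  eapply Rle_trans; [apply Rabs_triang|].
  rewrite Rabs_Ropp, Rabs_R1, Rabs_mult, (Rabs_right (eps N)) by lra.
  pose proof (Rabs_pos a). nra.
Qed.

Lemma vecmat_Delta_abs_le A B N u y K : (1 <= N)%nat -> (y <= N)%nat ->
  (forall z, (z <= N)%nat -> Rabs (u z) <= K) ->
  Rabs (vecmat N (Delta A B N) u y) <= (6 + Rabs A + Rabs B) * K.
Proof.
  intros HN Hy Hu. rewrite vecmat_Delta by auto.
  pose proof (robin_coef_abs_le A N HN). pose proof (robin_coef_abs_le B N HN).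
  pose proof (Rabs_pos A). pose proof (Rabs_pos B).
  assert (HK : 0 <= K) by (pose proof (Hu y Hy); pose proof (Rabs_pos (u y)); lra).
  assert (T1 : Rabs (-2 * u y) <= 2 * K).
  { rewrite Rabs_mult. replace (Rabs (-2)) with 2 by (unfold Rabs; destruct Rcase_abs; lra).
    pose proof (Hu y Hy). lra. }
  assert (T2 : Rabs (if Nat.ltb y N then u (S y) else 0) <= K).
  { destruct (Nat.ltb_spec y N); [apply Hu; lia|rewrite Rabs_R0; lra]. }
  assert (T3 : Rabs (if Nat.eqb y 0 then 0 else u (pred y)) <= K).
  { destruct (Nat.eqb y 0); [rewrite Rabs_R0; lra|apply Hu; lia]. }
  assert (T4 : Rabs (if Nat.eqb y 0 then (1 - A * eps N) * u O else 0) <= (1 + Rabs A) * K).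
  { destruct (Nat.eqb y 0); [|rewrite Rabs_R0; apply Rmult_le_pos; lra].
    rewrite Rabs_mult. apply Rmult_le_compat; auto using Rabs_pos. apply Hu; lia. }
  assert (T5 : Rabs (if Nat.eqb y N then (1 - B * eps N) * u N else 0) <= (1 + Rabs B) * K).
  { destruct (Nat.eqb y N); [|rewrite Rabs_R0; apply Rmult_le_pos; lra].
    rewrite Rabs_mult. apply Rmult_le_compat; auto using Rabs_pos. }
  match goal with |- Rabs (?t1 + ?t2 + ?t3 + ?t4 + ?t5) <= _ =>
    pose proof (Rabs_triang (t1 + t2 + t3 + t4) t5); pose proof (Rabs_triang (t1 + t2 + t3) t4);
    pose proof (Rabs_triang (t1 + t2) t3); pose proof (Rabs_triang t1 t2) end.
  lra.
Qed.

Lemma pR_row_estimates A B T : 0 < T ->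
  exists C0 C1 CP CD : R, exists N0 : nat, 0 <= CP /\ 0 <= CD /\
  forall N, (N0 <= N)%nat -> forall x y, (x <= N)%nat -> (y <= N)%nat ->
  let d r := / 2 * vecmat N (Delta A B N) (fun z => pR A B N r x z) y in
  (forall r, 0 <= r <= INR N ^ 2 * T -> Rabs (pR A B N r x y) <= C0) /\
  (forall r, 0 <= r <= INR N ^ 2 * T -> Rabs (d r) <= C1) /\
  (forall r, 1 <= r <= INR N ^ 2 * T -> Rabs (pR A B N r x y) * sqrt r <= CP) /\
  (forall r, 1 <= r <= INR N ^ 2 * T -> Rabs (d r) * (r * sqrt r) <= CD).
Proof.
  intros HT. destruct (Delta_coercive A B) as [c [N1 [Hc Hcoer]]].
  set (a := 4 * (Rabs A + Rabs B) + 4).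
  pose proof (Rabs_pos A). pose proof (Rabs_pos B).
  destruct (ceil_nat (2 * a)) as [na [Hna _]]; [unfold a; lra|].
  set (L0 := 2 * exp (a ^ 2 * T) / exp (- 2 * a)).
  assert (HL0 : 0 < L0) by (apply Rdiv_lt_0_compat; [pose proof (exp_pos (a ^ 2 * T)); lra|apply exp_pos]).
  exists (sqrt (exp (c * T))), (/ 2 * ((6 + Rabs A + Rabs B) * sqrt (exp (c * T)))),
    (row_decay_const c T L0), (derivative_decay_const c T L0), (Nat.max (Nat.max N1 na) 2).
  split; [apply sqrt_pos|].
  split; [unfold derivative_decay_const; apply Rmult_le_pos; [lra|apply sqrt_pos]|].
  intros N HN x y Hx Hy d.
  assert (HN1 : (1 <= N)%nat) by lia.
  assert (HNa : 2 * a <= INR N) by (assert (INR na <= INR N) by (apply le_INR; lia); lra).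
  set (w := fun r z => pR A B N r x z).
  pose proof (pR_heat_flow A B N x) as Hw. fold w in Hw.
  pose proof (Delta_symmetric A B N) as Hsym.
  pose proof (Hcoer N ltac:(lia) HN1) as Hco.
  pose proof (energy_pR_0 A B N x Hx) as HE0.
  assert (Hl1 : forall r, 0 <= r <= INR N ^ 2 * T -> l1norm N (w r) <= L0).
  { intros r Hr. apply (l1norm_pR_le A B a N); unfold a in *; try lia; try lra.
    apply eps_sq_time_le; auto. }
  assert (Hbd : forall z r, (z <= N)%nat -> 0 <= r <= INR N ^ 2 * T ->
                Rabs (w r z) <= sqrt (exp (c * T)))
    by (intros; apply (row_bounded N (Delta A B N) c T); auto).
  split; [|split; [|split]].
  - intros r Hr. apply (Hbd y r Hy Hr).
  - intros r Hr. unfold d. rewrite Rabs_mult, Rabs_right by lra.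
    apply Rmult_le_compat_l; [lra|]. apply vecmat_Delta_abs_le; auto.
    intros z Hz. apply Hbd; auto.
  - intros r Hr. apply (row_decay N (Delta A B N) c T HN1 HT Hc Hsym Hco w L0); auto.
  - intros r Hr. apply (row_derivative_decay N (Delta A B N) c T HN1 HT Hc Hsym Hco w L0); auto.
Qed.

Theorem mainTheorem12 (A B T : R) (HT : 0 < T) :
  exists C : R, exists N0 : nat,
    forall N : nat, (N0 <= N)%nat -> (1 <= N)%nat ->
    forall s t : R, 0 <= s -> s < t -> t <= INR N ^ 2 * T ->
    forall x y : nat, (x <= N)%nat -> (y <= N)%nat ->
    forall v : R, 0 <= v <= 1 ->
      Rabs (pR A B N t x y - pR A B N s x y) <= C * minfac s v * Rpower (t - s) v.
Proof.
  destruct (pR_row_estimates A B T HT) as (C0 & C1 & CP & CD & N0 & HCP & HCD & Hrow).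
  exists (2 * C0 + C1 + 2 * CP + CD), N0.
  intros N HN _ s t Hs Hst Ht x y Hx Hy v Hv.
  destruct (Hrow N HN x y Hx Hy) as (Hp & Hd & Hpdecay & Hddecay).
  apply (increment_bound (fun r => pR A B N r x y)
           (fun r => / 2 * vecmat N (Delta A B N) (fun z => pR A B N r x z) y)
           (INR N ^ 2 * T) C0 C1 CP CD); auto.
  intros r. apply (pR_heat_flow A B N x y r Hy).
Qed.
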